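(* Fix $\mu\ge0$ and $\tau_0\in W^{1,\infty}((0,L);S^{n-1})$. Suppose that for every $p\in[2,\infty)$, $\tau_p\in W^{1,p}((0,L);S^{n-1})$, let $k_p=K_p(\tau_p)$, and suppose $\limsup_{p\to\infty}k_p<\infty$ and there exist $\Lambda_p\in\mathbb{R}^n$ such that \[ \frac{d}{dt}\bigl(|\tau_p'|^{p-2}\tau_p'\bigr)+|\tau_p'|^p\tau_p=k_p^{p-1}\beta\bigl(\Lambda_p-(\Lambda_p\cdot\tau_p)\tau_p-\mu\tau_0+\mu(\tau_0\cdot\tau_p)\tau_p\bigr) \] holds weakly in $(0,L)$ for every $p\in[2,\infty)$. Then either $\limsup_{p\to\infty}p^{-6}|\Lambda_p|<\infty$, or there is a sequence $p_i\to\infty$ such that $\tau_{p_i}$ converges uniformly to a constant vector as $i\to\infty$.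
   Context: $n\ge2$, $\ell>0$, $\alpha\colon[0,\ell]\to(0,\infty)$ of bounded variation with $1/\alpha$ bounded; $\psi(s)=\int_0^sd\sigma/\alpha(\sigma)$, $L=\psi(\ell)$, $\phi=\psi^{-1}$, $\beta=\alpha\circ\phi\colon[0,L]\to(0,\infty)$. $K_p(\tau)=\bigl(\frac1L\int_0^L|\tau'|^p\,dt\bigr)^{1/p}$. *)

From Stdlib Require Import Reals Lra List.
Open Scope R_scope.
Open Scope list_scope.

(* ---------- finite sums and vectors in R^n (components i < n) ---------- *)
Fixpoint fsum (n : nat) (f : nat -> R) : R :=
  match n with O => 0 | S m => fsum m f + f m end.

Definition vec := nat -> R.
Definition dot (n : nat) (u v : vec) : R := fsum n (fun i => u i * v i).
Definition vnorm (n : nat) (u : vec) : R := sqrt (dot n u u).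
Definition vsub (u v : vec) : vec := fun i => u i - v i.

(* real power x^y for x >= 0, with the convention 0^y = 0 (only used with y > 0,
   or multiplied by a factor vanishing where x = 0) *)
Definition rpow (x y : R) : R := if Rle_dec x 0 then 0 else Rpower x y.

(* A tagged partition is a list of (tag, right endpoint); intervals are
   [previous endpoint, right endpoint]. *)
Fixpoint fine (delta : R -> R) (a b : R) (P : list (R * R)) : Prop :=
  match P with
  | nil => a = b
  | (t, x) :: P' =>
      a < x /\ a <= t <= x /\ t - delta t < a /\ x < t + delta t /\ fine delta x b P'
  end.

Fixpoint rsum (f : R -> R) (a : R) (P : list (R * R)) : R :=
  match P with
  | nil => 0
  | (t, x) :: P' => f t * (x - a) + rsum f x P'
  end.

Definition HKint (f : R -> R) (a b I : R) : Prop :=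
  a <= b /\
  forall eps, 0 < eps ->
    exists delta : R -> R, (forall t, 0 < delta t) /\
      forall P, fine delta a b P -> Rabs (rsum f a P - I) < eps.

Definition HKintegrable (f : R -> R) (a b : R) : Prop := exists I, HKint f a b I.

(* Lebesgue measurability on [a,b]: every truncation is (Lebesgue, equivalently
   gauge) integrable on [a,b]; bounded gauge-integrable = bounded Lebesgue
   integrable = bounded measurable on a bounded interval. *)
Definition trunc (M : R) (f : R -> R) : R -> R := fun t => Rmax (- M) (Rmin M (f t)).
Definition measurable_on (f : R -> R) (a b : R) : Prop :=
  forall M, 0 < M -> HKintegrable (trunc M f) a b.

Definition Lp_vec (n : nat) (p : R) (g : R -> vec) (a b : R) : Prop :=
  (forall i, (i < n)%nat -> measurable_on (fun t => g t i) a b) /\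
  HKintegrable (fun t => rpow (vnorm n (g t)) p) a b.

Definition Linf_vec (n : nat) (g : R -> vec) (a b : R) : Prop :=
  (forall i, (i < n)%nat -> measurable_on (fun t => g t i) a b) /\
  exists M, forall t, a <= t <= b -> vnorm n (g t) <= M.

(* tau is (the continuous representative of) the primitive of g on [0,L]:
   tau t = tau 0 + int_0^t g, so g is the weak derivative tau'. *)
Definition primitive_of (n : nat) (L : R) (tau g : R -> vec) : Prop :=
  forall i, (i < n)%nat -> forall t, 0 <= t <= L ->
    HKint (fun s => g s i) 0 t (tau t i - tau 0 i).

Definition W1p_sphere (n : nat) (p L : R) (tau g : R -> vec) : Prop :=
  primitive_of n L tau g /\ Lp_vec n p g 0 L /\
  forall t, 0 <= t <= L -> vnorm n (tau t) = 1.

Definition W1inf_sphere (n : nat) (L : R) (tau g : R -> vec) : Prop :=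
  primitive_of n L tau g /\ Linf_vec n g 0 L /\
  forall t, 0 <= t <= L -> vnorm n (tau t) = 1.

Definition is_Kp (n : nat) (p L : R) (g : R -> vec) (k : R) : Prop :=
  exists I, HKint (fun t => rpow (vnorm n (g t)) p) 0 L I /\ k = rpow (I / L) (/ p).

Definition test_fun (a b : R) (phi dphi : R -> R) : Prop :=
  (exists D : nat -> R -> R, D O = phi /\ D 1%nat = dphi /\
    forall k x, derivable_pt_lim (D k) x (D (S k) x)) /\
  exists c d, a < c /\ c < d /\ d < b /\ forall t, (t < c \/ d < t) -> phi t = 0.

(* d/dt V + A = F weakly on (0,L), componentwise (i < n):
   for every test function phi,  int_0^L ( - V_i phi' + (A_i - F_i) phi ) = 0 *)
Definition weak_eq (n : nat) (L : R) (V A F : R -> vec) : Prop :=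
  forall i, (i < n)%nat -> forall phi dphi, test_fun 0 L phi dphi ->
    HKint (fun t => - V t i * dphi t + (A t i - F t i) * phi t) 0 L 0.

Definition bounded_variation (f : R -> R) (a b : R) : Prop :=
  exists M, forall (x : nat -> R) (m : nat),
    (forall i, (i <= m)%nat -> a <= x i <= b) ->
    (forall i, (i < m)%nat -> x i <= x (S i)) ->
    fsum m (fun i => Rabs (f (x (S i)) - f (x i))) <= M.

(* Suppose |Lam_p| / p^6 is unbounded; then |Lam_p| is unbounded (the rate p^6 plays
   no further role).  Writing k_p = K_p(tau_p), the Young-type splitting
   |tau'| <= lam + |tau'|^p / lam^(p-1) with lam = 2 k_p gives the Hoelder modulus
     |tau_p(t) - tau_p(s)| <= 2 k_p |t - s| + L k_p 2^(1-p).
   Two cases remain, depending on the energies k_p (which are bounded above):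
   - k_p is arbitrarily small for large p: the oscillation of tau_p is at most 3 L k_p;
   - k_p >= kap > 0 eventually: testing the weak Euler-Lagrange equation against
     phi e, with phi a fixed smooth bump and e = Lam_p / |Lam_p|, bounds
     |Lam_p| * int beta phi (1 - (e.tau_p)^2) independently of p; hence where |Lam_p|
     is large tau_p is close to +e or -e on the interior, and by the modulus on [0,L].
   In both cases the oscillation of tau_p vanishes along a sequence p_j -> oo, and
   Bolzano-Weierstrass applied to tau_{p_j}(L/2) yields a uniform constant limit. *)

From Stdlib Require Import Reals Lra Lia List Classical ClassicalEpsilon.
From Coquelicot Require Coquelicot.
Open Scope R_scope.

Lemma fsum_ext n f g : (forall i, (i < n)%nat -> f i = g i) -> fsum n f = fsum n g.
Proof.
  induction n as [|n IH]; simpl; intros H; auto.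
  rewrite IH by (intros; apply H; lia). rewrite H by lia. reflexivity.
Qed.

Lemma fsum_plus n f g : fsum n (fun i => f i + g i) = fsum n f + fsum n g.
Proof. induction n; simpl; [lra|]. rewrite IHn; lra. Qed.

Lemma fsum_scal n c f : fsum n (fun i => c * f i) = c * fsum n f.
Proof. induction n; simpl; [lra|]. rewrite IHn; lra. Qed.

(* A linear combination of three sums, the shape of every expanded square below. *)
Lemma fsum_lin3 n (a b c : R) f g h :
  fsum n (fun i => a * f i + b * g i + c * h i) = a * fsum n f + b * fsum n g + c * fsum n h.
Proof. rewrite !fsum_plus, !fsum_scal; ring. Qed.

Lemma fsum_const n c : fsum n (fun _ => c) = INR n * c.
Proof. induction n; cbn [fsum]; [simpl; lra|]. rewrite IHn, S_INR; lra. Qed.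

Lemma fsum_le n f g : (forall i, (i < n)%nat -> f i <= g i) -> fsum n f <= fsum n g.
Proof.
  induction n as [|n IH]; simpl; intros H; [lra|].
  assert (f n <= g n) by (apply H; lia).
  assert (fsum n f <= fsum n g) by (apply IH; intros; apply H; lia); lra.
Qed.

Lemma fsum_nonneg n f : (forall i, (i < n)%nat -> 0 <= f i) -> 0 <= fsum n f.
Proof.
  intros H. rewrite <- (Rmult_0_r (INR n)), <- fsum_const. apply fsum_le; auto.
Qed.

Lemma fsum_abs n f : Rabs (fsum n f) <= fsum n (fun i => Rabs (f i)).
Proof.
  induction n; simpl; [rewrite Rabs_R0; lra|].
  eapply Rle_trans; [apply Rabs_triang | lra].
Qed.

Lemma fsum_term_le n f j :
  (forall i, (i < n)%nat -> 0 <= f i) -> (j < n)%nat -> f j <= fsum n f.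
Proof.
  induction n as [|n IH]; intros H Hj; [lia|]. simpl.
  assert (0 <= fsum n f) by (apply fsum_nonneg; intros; apply H; lia).
  assert (0 <= f n) by (apply H; lia).
  destruct (Nat.eq_dec j n) as [->|]; [lra|].
  assert (f j <= fsum n f) by (apply IH; [intros; apply H; lia | lia]); lra.
Qed.

Lemma dot_nonneg n u : 0 <= dot n u u.
Proof. apply fsum_nonneg; intros; nra. Qed.

Lemma vnorm_nonneg n u : 0 <= vnorm n u.
Proof. apply sqrt_pos. Qed.

Lemma dot_sym n u v : dot n u v = dot n v u.
Proof. apply fsum_ext; intros; ring. Qed.

Lemma dot_lin_r n u (a b : R) v w :
  dot n u (fun i => a * v i + b * w i) = a * dot n u v + b * dot n u w.
Proof. unfold dot. rewrite <- !fsum_scal, <- fsum_plus. apply fsum_ext; intros; ring. Qed.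

Lemma dot_unit n u : vnorm n u = 1 -> dot n u u = 1.
Proof.
  unfold vnorm; intros H. rewrite <- (sqrt_sqrt (dot n u u)) by apply dot_nonneg.
  rewrite H; ring.
Qed.

Lemma comp_sq_le_dot n u i : (i < n)%nat -> u i * u i <= dot n u u.
Proof. intros Hi. apply (fsum_term_le n (fun i => u i * u i)); auto; intros; nra. Qed.

Lemma comp_le_vnorm n u i : (i < n)%nat -> Rabs (u i) <= vnorm n u.
Proof.
  intros Hi. unfold vnorm. rewrite <- sqrt_Rsqr_abs. apply sqrt_le_1_alt.
  unfold Rsqr. now apply comp_sq_le_dot.
Qed.

Lemma vnorm_le_sum n u : vnorm n u <= fsum n (fun i => Rabs (u i)).
Proof.
  assert (Hsum : forall m, 0 <= fsum m (fun i => Rabs (u i)))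
    by (intros; apply fsum_nonneg; intros; apply Rabs_pos).
  unfold vnorm. rewrite <- (sqrt_Rsqr _ (Hsum n)). apply sqrt_le_1_alt. unfold Rsqr, dot.
  induction n as [|n IH]; simpl; [lra|].
  pose proof (Hsum n). pose proof (Rabs_pos (u n)).
  assert (u n * u n = Rabs (u n) * Rabs (u n)) by (rewrite <- Rabs_mult, Rabs_right; nra).
  nra.
Qed.

Lemma dot_zero n u v : dot n v v = 0 -> dot n u v = 0.
Proof.
  intros H. rewrite <- (Rmult_0_r (INR n)), <- fsum_const. apply fsum_ext. intros i Hi.
  pose proof (comp_sq_le_dot n v i Hi). pose proof (dot_nonneg n v).
  assert (Hvi : v i = 0) by nra. rewrite Hvi; ring.
Qed.

Lemma cauchy_schwarz n u v : dot n u v * dot n u v <= dot n u u * dot n v v.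
Proof.
  destruct (Req_dec (dot n v v) 0) as [H|H].
  { rewrite (dot_zero n u v H), H; lra. }
  assert (Hv : 0 < dot n v v) by (pose proof (dot_nonneg n v); lra).
  set (l := dot n u v / dot n v v).
  assert (Hsq : 0 <= fsum n (fun i => (u i - l * v i) * (u i - l * v i)))
    by (apply fsum_nonneg; intros; apply Rle_0_sqr).
  rewrite (fsum_ext n _ (fun i => 1 * (u i * u i) + (- 2 * l) * (u i * v i) + (l * l) * (v i * v i)))
    in Hsq by (intros; ring).
  rewrite fsum_lin3 in Hsq. fold (dot n u u) (dot n u v) (dot n v v) in Hsq.
  unfold l in Hsq.
  replace (1 * dot n u u + - 2 * (dot n u v / dot n v v) * dot n u v
           + dot n u v / dot n v v * (dot n u v / dot n v v) * dot n v v)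
    with ((dot n u u * dot n v v - dot n u v * dot n u v) / dot n v v) in Hsq by (field; lra).
  apply Rmult_le_compat_r with (r := dot n v v) in Hsq; [|lra].
  unfold Rdiv in Hsq. rewrite Rmult_0_l, Rmult_assoc, Rinv_l in Hsq by lra. lra.
Qed.

Lemma dot_abs_le1 n u v : dot n u u = 1 -> dot n v v = 1 -> Rabs (dot n u v) <= 1.
Proof.
  intros Hu Hv. pose proof (cauchy_schwarz n u v) as H. rewrite Hu, Hv in H.
  apply Rabs_le; nra.
Qed.

Lemma comp_abs_le1 n e i : dot n e e = 1 -> (i < n)%nat -> Rabs (e i) <= 1.
Proof. intros He Hi. pose proof (comp_sq_le_dot n e i Hi). apply Rabs_le; nra. Qed.

Lemma dot_diff_abs n e a b :
  dot n e e = 1 -> Rabs (dot n e a - dot n e b) <= fsum n (fun i => Rabs (a i - b i)).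
Proof.
  intros He.
  replace (dot n e a - dot n e b) with (dot n e (fun i => 1 * a i + (-1) * b i))
    by (rewrite dot_lin_r; ring).
  eapply Rle_trans; [apply fsum_abs|]. apply fsum_le. intros i Hi.
  rewrite Rabs_mult. pose proof (comp_abs_le1 n e i He Hi).
  replace (1 * a i + -1 * b i) with (a i - b i) by ring.
  pose proof (Rabs_pos (a i - b i)). nra.
Qed.

Lemma comp_close_of_dot n u v i :
  dot n u u = 1 -> dot n v v = 1 -> (i < n)%nat ->
  (u i - v i) * (u i - v i) <= 2 * (1 - dot n v u).
Proof.
  intros Hu Hv Hi.
  pose proof (comp_sq_le_dot n (fun j => u j - v j) i Hi) as H. simpl in H.
  unfold dot in H at 1.
  rewrite (fsum_ext n _ (fun j => 1 * (u j * u j) + (- 2) * (v j * u j) + 1 * (v j * v j)))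
    in H by (intros; ring).
  rewrite fsum_lin3 in H. fold (dot n u u) (dot n v u) (dot n v v) in H. lra.
Qed.

Definition unitv (n : nat) (Lam : vec) : vec := fun i => Lam i / vnorm n Lam.

Lemma unitv_scale n Lam v : 0 < vnorm n Lam -> dot n Lam v = vnorm n Lam * dot n (unitv n Lam) v.
Proof. intros H. unfold dot, unitv. rewrite <- fsum_scal. apply fsum_ext; intros; field; lra. Qed.

Lemma unitv_dot n Lam : 0 < vnorm n Lam -> dot n (unitv n Lam) (unitv n Lam) = 1.
Proof.
  intros H. unfold dot, unitv.
  rewrite (fsum_ext n _ (fun i => / (vnorm n Lam * vnorm n Lam) * (Lam i * Lam i)))
    by (intros; field; lra).
  rewrite fsum_scal. fold (dot n Lam Lam). unfold vnorm in *.
  rewrite sqrt_sqrt by apply dot_nonneg. field.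
  intros E. rewrite E, sqrt_0 in H. lra.
Qed.

(** Riemann sums over tagged partitions and the gauge integral. *)

Lemma fine_le d a b P : fine d a b P -> a <= b.
Proof.
  revert a. induction P as [|[t x] P IH]; simpl; intros a H; [lra|].
  destruct H as (?&?&?&?&H). apply IH in H. lra.
Qed.

Lemma fine_mono d1 d2 a b P : (forall t, d1 t <= d2 t) -> fine d1 a b P -> fine d2 a b P.
Proof.
  intros Hd. revert a. induction P as [|[t x] P IH]; simpl; intros a H; auto.
  destruct H as (?&?&?&?&?). specialize (Hd t). repeat split; auto; lra.
Qed.

Lemma fine_app d a b c P1 P2 : fine d a b P1 -> fine d b c P2 -> fine d a c (P1 ++ P2).
Proof.
  revert a. induction P1 as [|[t x] P IH]; simpl; intros a H1 H2; [subst; auto|].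
  destruct H1 as (?&?&?&?&?). repeat split; auto; lra.
Qed.

Definition gmin (d1 d2 : R -> R) : R -> R := fun t => Rmin (d1 t) (d2 t).

Lemma gmin_pos d1 d2 : (forall t, 0 < d1 t) -> (forall t, 0 < d2 t) -> forall t, 0 < gmin d1 d2 t.
Proof. intros; apply Rmin_glb_lt; auto. Qed.

Lemma fine_gmin_l d1 d2 a b P : fine (gmin d1 d2) a b P -> fine d1 a b P.
Proof. apply fine_mono; intros; apply Rmin_l. Qed.

Lemma fine_gmin_r d1 d2 a b P : fine (gmin d1 d2) a b P -> fine d2 a b P.
Proof. apply fine_mono; intros; apply Rmin_r. Qed.

Lemma gauge_finite (n : nat) (a b : R) (Q : nat -> list (R * R) -> Prop) :
  (forall i, (i < n)%nat -> exists d, (forall t, 0 < d t) /\ forall P, fine d a b P -> Q i P) ->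
  exists d, (forall t, 0 < d t) /\ forall P, fine d a b P -> forall i, (i < n)%nat -> Q i P.
Proof.
  induction n as [|n IH]; intros H.
  - exists (fun _ => 1). split; [intros; lra | intros; lia].
  - destruct IH as [d1 [Hd1 K1]]; [intros; apply H; lia|].
    destruct (H n ltac:(lia)) as [d2 [Hd2 K2]].
    exists (gmin d1 d2). split; [apply gmin_pos; auto|]. intros P HP i Hi.
    destruct (Nat.eq_dec i n) as [->|].
    + apply K2. eapply fine_gmin_r; eauto.
    + apply K1; [eapply fine_gmin_l; eauto | lia].
Qed.

Lemma cousin d a b : (forall t, 0 < d t) -> a <= b -> exists P, fine d a b P.
Proof.
  intros Hd Hab.
  set (E := fun x => a <= x <= b /\ exists P, fine d a x P).
  assert (Ea : E a) by (split; [lra | exists nil; reflexivity]).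
  destruct (completeness E) as [s [Hub Hlub]].
  { exists b. intros x [Hx _]; lra. }
  { exists a; exact Ea. }
  assert (Has : a <= s) by (apply Hub; exact Ea).
  assert (Hsb : s <= b) by (apply Hlub; intros x [Hx _]; lra).
  assert (Hx : exists x, E x /\ s - d s < x).
  { apply NNPP. intros Hn.
    assert (s <= s - d s).
    { apply Hlub. intros x Ex. apply Rnot_lt_le. intros Hlt. apply Hn. exists x; auto. }
    specialize (Hd s); lra. }
  destruct Hx as [x [[Hx1 [P HP]] Hx2]].
  assert (Hxs : x <= s) by (apply Hub; split; [lra | exists P; auto]).
  assert (Es : exists P, fine d a s P).
  { destruct (Req_dec x s) as [<-|]; [exists P; auto|].
    exists (P ++ (s, s) :: nil). apply fine_app with x; auto.
    simpl. specialize (Hd s). repeat split; lra. }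
  destruct Es as [Q HQ].
  destruct (Req_dec s b) as [<-|]; [exists Q; auto|].
  (* otherwise one more step past [s] contradicts maximality *)
  exfalso. set (y := Rmin b (s + d s / 2)).
  assert (s < y) by (apply Rmin_glb_lt; specialize (Hd s); lra).
  assert (y <= s + d s / 2) by apply Rmin_r.
  assert (y <= b) by apply Rmin_l.
  assert (y <= s); [|lra].
  apply Hub. split; [lra|]. exists (Q ++ (s, y) :: nil). apply fine_app with s; auto.
  simpl. specialize (Hd s). repeat split; lra.
Qed.

Lemma rsum_app f d a b P1 P2 : fine d a b P1 -> rsum f a (P1 ++ P2) = rsum f a P1 + rsum f b P2.
Proof.
  revert a. induction P1 as [|[t x] P IH]; simpl; intros a H1; [subst; lra|].
  destruct H1 as (?&?&?&?&?). rewrite (IH x); auto; lra.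
Qed.

Lemma rsum_ext f g a P : (forall t, f t = g t) -> rsum f a P = rsum g a P.
Proof. intros H. revert a. induction P as [|[t x] P IH]; simpl; intros; [lra|]. rewrite IH, H; lra. Qed.

Lemma rsum_plus f g a P : rsum (fun t => f t + g t) a P = rsum f a P + rsum g a P.
Proof. revert a. induction P as [|[t x] P IH]; simpl; intros; [lra|]. rewrite IH; lra. Qed.

Lemma rsum_scal c f a P : rsum (fun t => c * f t) a P = c * rsum f a P.
Proof. revert a. induction P as [|[t x] P IH]; simpl; intros; [lra|]. rewrite IH; lra. Qed.

Lemma rsum_fsum n f a P :
  rsum (fun t => fsum n (fun i => f i t)) a P = fsum n (fun i => rsum (f i) a P).
Proof.
  induction n as [|n IH]; simpl.
  - revert a. induction P as [|[t x] P IH]; simpl; intros; [lra|]. rewrite IH; lra.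
  - rewrite <- IH, <- rsum_plus. reflexivity.
Qed.

Lemma rsum_const c d a b P : fine d a b P -> rsum (fun _ => c) a P = c * (b - a).
Proof.
  revert a. induction P as [|[t x] P IH]; simpl; intros a H; [subst; lra|].
  destruct H as (?&?&?&?&?). rewrite IH; auto; lra.
Qed.

Lemma rsum_le f g d a b P :
  (forall t, a <= t <= b -> f t <= g t) -> fine d a b P -> rsum f a P <= rsum g a P.
Proof.
  revert a. induction P as [|[t x] P IH]; simpl; intros a Hfg H; [lra|].
  destruct H as (?&?&?&?&H). pose proof (fine_le _ _ _ _ H).
  assert (f t <= g t) by (apply Hfg; lra).
  assert (rsum f x P <= rsum g x P) by (apply IH; auto; intros; apply Hfg; lra).
  nra.
Qed.

Lemma rsum_nonneg f d a b P : (forall t, a <= t <= b -> 0 <= f t) -> fine d a b P -> 0 <= rsum f a P.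
Proof.
  intros H HP. rewrite <- (Rmult_0_l (b - a)), <- (rsum_const 0 d a b P HP).
  eapply rsum_le; eauto.
Qed.

Lemma rsum_abs f d a b P : fine d a b P -> Rabs (rsum f a P) <= rsum (fun t => Rabs (f t)) a P.
Proof.
  revert a. induction P as [|[t x] P IH]; simpl; intros a H; [rewrite Rabs_R0; lra|].
  destruct H as (?&?&?&?&H). eapply Rle_trans; [apply Rabs_triang|].
  rewrite Rabs_mult, (Rabs_right (x - a)) by lra. specialize (IH x H). lra.
Qed.

Definition meas (a b u v : R) : R := Rmax 0 (Rmin b v - Rmax a u).

Ltac unfold_minmax := unfold meas, Rmax, Rmin;
  repeat match goal with
  | |- context [Rle_dec ?p ?q] => destruct (Rle_dec p q)
  | H : context [Rle_dec ?p ?q] |- _ => destruct (Rle_dec p q)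
  end.

Lemma meas_split a x b u v : a <= x <= b -> meas a b u v <= meas a x u v + meas x b u v.
Proof. intros H. unfold_minmax; lra. Qed.

Lemma rsum_lower f d rho a b P u v m :
  (forall t, d t <= rho) -> fine d a b P -> (forall t, a <= t <= b -> 0 <= f t) ->
  (forall t, a <= t <= b -> u <= t <= v -> m <= f t) -> 0 <= m ->
  m * meas a b (u + rho) (v - rho) <= rsum f a P.
Proof.
  intros Hd. revert a.
  induction P as [|[t x] P IH]; simpl; intros a HP Hf Hm Hm0.
  { subst. assert (meas b b (u + rho) (v - rho) = 0) as -> by (unfold_minmax; lra). lra. }
  destruct HP as (H1&H2&H3&H4&H5). pose proof (fine_le _ _ _ _ H5).
  assert (IH' : m * meas x b (u + rho) (v - rho) <= rsum f x P)
    by (apply IH; auto; intros; [apply Hf | apply Hm]; auto; lra).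
  assert (meas a b (u + rho) (v - rho) <= meas a x (u + rho) (v - rho) + meas x b (u + rho) (v - rho))
    by (apply meas_split; lra).
  assert (m * meas a x (u + rho) (v - rho) <= f t * (x - a)); [|nra].
  pose proof (Hd t). assert (0 <= f t) by (apply Hf; lra).
  unfold meas. destruct (Rle_dec (Rmin x (v - rho) - Rmax a (u + rho)) 0).
  - rewrite Rmax_left by lra. nra.
  - rewrite Rmax_right by lra.
    pose proof (Rmax_l a (u + rho)). pose proof (Rmax_r a (u + rho)).
    pose proof (Rmin_l x (v - rho)). pose proof (Rmin_r x (v - rho)).
    assert (m <= f t) by (apply Hm; lra). nra.
Qed.

Lemma rsum_lower_window f d a b P t0 r m :
  0 < r -> a <= t0 - r -> t0 + r <= b -> (forall t, d t <= r / 2) -> fine d a b P ->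
  (forall t, a <= t <= b -> 0 <= f t) -> (forall t, t0 - r <= t <= t0 + r -> m <= f t) -> 0 <= m ->
  m * r <= rsum f a P.
Proof.
  intros Hr Ha Hb Hd HP Hf Hm Hm0.
  replace r with (meas a b (t0 - r + r / 2) (t0 + r - r / 2)) at 1 by (unfold_minmax; lra).
  apply rsum_lower with d; auto.
Qed.

Lemma HKint_nonneg f a b I : HKint f a b I -> (forall t, a <= t <= b -> 0 <= f t) -> 0 <= I.
Proof.
  intros [Hab H] Hf. apply Rle_plus_epsilon. intros eps Heps. destruct (H eps Heps) as [d [Hd HP]].
  destruct (cousin d a b Hd Hab) as [P HPf]. specialize (HP P HPf).
  pose proof (rsum_nonneg f d a b P Hf HPf). apply Rabs_def2 in HP. lra.
Qed.

Lemma HKint_point f a I : HKint f a a I -> I = 0.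
Proof.
  intros [_ H]. apply Rle_antisym; apply Rle_plus_epsilon; intros eps Heps;
    destruct (H eps Heps) as [d [Hd HP]]; specialize (HP nil eq_refl);
    simpl in HP; apply Rabs_def2 in HP; lra.
Qed.

Lemma HKint_increment_bounds f s t Is It lo hi :
  0 <= s <= t -> HKint f 0 s Is -> HKint f 0 t It ->
  (forall x, s <= x <= t -> lo <= f x <= hi) -> lo * (t - s) <= It - Is <= hi * (t - s).
Proof.
  intros Hst [_ H1] [_ H2] Hf. split; apply Rle_plus_epsilon; intros eps Heps;
    destruct (H1 (eps / 2) ltac:(lra)) as [d1 [Hd1 K1]];
    destruct (H2 (eps / 2) ltac:(lra)) as [d2 [Hd2 K2]];
    pose proof (gmin_pos _ _ Hd1 Hd2) as Hd;
    destruct (cousin _ 0 s Hd ltac:(lra)) as [P1 HP1];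
    destruct (cousin _ s t Hd ltac:(lra)) as [P2 HP2];
    specialize (K1 P1 (fine_gmin_l _ _ _ _ _ HP1));
    specialize (K2 (P1 ++ P2) (fine_gmin_r _ _ _ _ _ (fine_app _ _ _ _ _ _ HP1 HP2)));
    rewrite (rsum_app f _ 0 s P1 P2 HP1) in K2;
    apply Rabs_def2 in K1; apply Rabs_def2 in K2;
    rewrite <- ?(rsum_const lo _ s t P2 HP2), <- ?(rsum_const hi _ s t P2 HP2).
  - assert (rsum (fun _ => lo) s P2 <= rsum f s P2)
      by (apply rsum_le with (gmin d1 d2) t; auto; intros; apply Hf; auto). lra.
  - assert (rsum f s P2 <= rsum (fun _ => hi) s P2)
      by (apply rsum_le with (gmin d1 d2) t; auto; intros; apply Hf; auto). lra.
Qed.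

Lemma Rpower_pos x y : 0 < Rpower x y.
Proof. apply exp_pos. Qed.

Lemma rpow_nonneg x y : 0 <= rpow x y.
Proof. unfold rpow. destruct (Rle_dec x 0); [lra | apply Rlt_le, Rpower_pos]. Qed.

Lemma rpow_pos x y : 0 < x -> rpow x y = Rpower x y.
Proof. intros H. unfold rpow. destruct (Rle_dec x 0); [lra | reflexivity]. Qed.

Lemma rpow_zero y : rpow 0 y = 0.
Proof. unfold rpow. destruct (Rle_dec 0 0); [reflexivity | lra]. Qed.

Lemma Rpower_split x p : 0 < x -> Rpower x p = Rpower x (p - 1) * x.
Proof. intros H. rewrite <- (Rpower_1 x) at 3 by auto. rewrite <- Rpower_plus. f_equal; ring. Qed.

Lemma young_linear x lam p : 0 <= x -> 0 < lam -> 1 <= p -> x <= lam + rpow x p / Rpower lam (p - 1).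
Proof.
  intros Hx Hl Hp. pose proof (Rpower_pos lam (p - 1)).
  assert (0 <= rpow x p / Rpower lam (p - 1))
    by (apply Rle_mult_inv_pos; auto; apply rpow_nonneg).
  destruct (Rle_dec x lam); [lra|].
  rewrite rpow_pos, Rpower_split by lra.
  assert (Rpower lam (p - 1) <= Rpower x (p - 1)) by (apply Rle_Rpower_l; lra).
  assert (x <= Rpower x (p - 1) * x / Rpower lam (p - 1)); [|lra].
  apply Rmult_le_reg_r with (Rpower lam (p - 1)); auto.
  unfold Rdiv. rewrite Rmult_assoc, Rinv_l by lra. nra.
Qed.

Lemma young_flux x k p : 0 <= x -> 0 < k -> 2 <= p ->
  rpow x (p - 2) * x <= Rpower k (p - 1) * (1 + rpow x p / Rpower k p).
Proof.
  intros Hx Hk Hp. pose proof (Rpower_pos k (p - 1)). pose proof (Rpower_pos k p).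
  assert (0 <= rpow x p / Rpower k p) by (apply Rle_mult_inv_pos; auto; apply rpow_nonneg).
  destruct (Req_dec x 0) as [->|]; [rewrite Rmult_0_r; nra|].
  rewrite !rpow_pos by lra.
  replace (Rpower x (p - 2) * x) with (Rpower x (p - 1))
    by (rewrite (Rpower_split x (p - 1)) by lra; do 2 f_equal; ring).
  destruct (Rle_dec x k).
  - assert (Rpower x (p - 1) <= Rpower k (p - 1)) by (apply Rle_Rpower_l; lra).
    assert (0 <= Rpower k (p - 1) * (Rpower x p / Rpower k p))
      by (apply Rmult_le_pos; [lra | apply Rle_mult_inv_pos; auto; apply Rlt_le, Rpower_pos]).
    nra.
  - rewrite (Rpower_split x p), (Rpower_split k p) by lra.
    assert (Rpower x (p - 1) * x / (Rpower k (p - 1) * k) * Rpower k (p - 1)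
            = Rpower x (p - 1) * x / k) by (field; lra).
    assert (Rpower x (p - 1) <= Rpower x (p - 1) * x / k); [|nra].
    apply Rmult_le_reg_r with k; auto. unfold Rdiv. rewrite Rmult_assoc, Rinv_l by lra.
    pose proof (Rpower_pos x (p - 1)). nra.
Qed.

Lemma Rpower2_bound p : 1 <= p -> / Rpower 2 (p - 1) <= 2 / p.
Proof.
  intros Hp. unfold Rpower. pose proof (exp_ineq1_le ((p - 1) * ln 2)). pose proof ln_lt_2.
  assert (p / 2 <= exp ((p - 1) * ln 2)) by nra.
  replace (2 / p) with (/ (p / 2)) by (field; lra). apply Rinv_le_contravar; lra.
Qed.

Lemma Kp_energy n p L g k : 0 < L -> 2 <= p -> is_Kp n p L g k ->
  0 <= k /\ HKint (fun t => rpow (vnorm n (g t)) p) 0 L (L * rpow k p).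
Proof.
  intros HL Hp [I [HI Hk]].
  assert (HI0 : 0 <= I) by (apply (HKint_nonneg _ _ _ _ HI); intros; apply rpow_nonneg).
  destruct (Req_dec I 0) as [E|E].
  { subst. unfold Rdiv. rewrite Rmult_0_l, !rpow_zero, Rmult_0_r. split; [lra | exact HI]. }
  assert (HIL : 0 < I / L) by (apply Rdiv_lt_0_compat; lra).
  rewrite rpow_pos in Hk by auto.
  pose proof (Rpower_pos (I / L) (/ p)). split; [lra|].
  replace (L * rpow k p) with I; auto.
  rewrite rpow_pos, Hk, Rpower_mult by lra.
  replace (/ p * p) with 1 by (field; lra). rewrite Rpower_1 by auto. field; lra.
Qed.

(** Hoelder-type modulus of continuity of a [W^{1,p}] map. *)

(* Splitting [|tau'| <= lam + |tau'|^p / lam^(p-1)] and integrating over [s,t]. *)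
Lemma increment_bound n p L tau g I i s t lam : 2 <= p -> primitive_of n L tau g ->
  HKint (fun t => rpow (vnorm n (g t)) p) 0 L I -> (i < n)%nat -> 0 <= s <= t -> t <= L -> 0 < lam ->
  Rabs (tau t i - tau s i) <= lam * (t - s) + I / Rpower lam (p - 1).
Proof.
  intros Hp Hprim [_ HI] Hi Hst HtL Hlam.
  destruct (Hprim i Hi s ltac:(lra)) as [_ H1]. destruct (Hprim i Hi t ltac:(lra)) as [_ H2].
  set (G := fun x => rpow (vnorm n (g x)) p) in *.
  set (c := / Rpower lam (p - 1)).
  assert (Hc : 0 < c) by apply Rinv_0_lt_compat, Rpower_pos.
  apply Rle_plus_epsilon. intros eps Heps. set (e := eps / (3 + c)).
  assert (He : 0 < e) by (apply Rdiv_lt_0_compat; lra).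
  destruct (H1 e He) as [d1 [Hd1 K1]]; destruct (H2 e He) as [d2 [Hd2 K2]];
    destruct (HI e He) as [d3 [Hd3 K3]].
  set (d := gmin d1 (gmin d2 d3)).
  assert (Hd : forall x, 0 < d x) by (repeat apply gmin_pos; auto).
  destruct (cousin d 0 s Hd ltac:(lra)) as [P1 HP1];
    destruct (cousin d s t Hd ltac:(lra)) as [P2 HP2];
    destruct (cousin d t L Hd ltac:(lra)) as [P3 HP3].
  pose proof (fine_app _ _ _ _ _ _ HP1 HP2) as HP12.
  pose proof (fine_app _ _ _ _ _ _ HP12 HP3) as HP123.
  specialize (K1 P1 (fine_gmin_l _ _ _ _ _ HP1)).
  specialize (K2 (P1 ++ P2) (fine_gmin_l _ _ _ _ _ (fine_gmin_r _ _ _ _ _ HP12))).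
  specialize (K3 _ (fine_gmin_r _ _ _ _ _ (fine_gmin_r _ _ _ _ _ HP123))).
  rewrite (rsum_app _ _ 0 s P1 P2 HP1) in K2.
  rewrite (rsum_app G _ 0 t (P1 ++ P2) P3 HP12), (rsum_app G _ 0 s P1 P2 HP1) in K3.
  assert (0 <= rsum G 0 P1) by (apply rsum_nonneg with d s; auto; intros; apply rpow_nonneg).
  assert (0 <= rsum G t P3) by (apply rsum_nonneg with d L; auto; intros; apply rpow_nonneg).
  apply Rabs_def2 in K1; apply Rabs_def2 in K2; apply Rabs_def2 in K3.
  assert (Hmid : Rabs (rsum (fun x => g x i) s P2) <= lam * (t - s) + c * rsum G s P2).
  { eapply Rle_trans; [apply rsum_abs with d t; auto|].
    rewrite <- (rsum_const lam d s t P2 HP2), <- rsum_scal, <- rsum_plus.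
    apply rsum_le with d t; auto. intros x _.
    eapply Rle_trans; [apply (comp_le_vnorm n); auto|].
    rewrite Rmult_comm. apply young_linear; auto; [apply vnorm_nonneg | lra]. }
  assert (c * rsum G s P2 <= c * (I + e)) by (apply Rmult_le_compat_l; lra).
  assert (E : e * 3 + e * c = eps) by (unfold e; field; lra).
  unfold Rdiv. rewrite (Rmult_comm I). fold c.
  pose proof (Rle_abs (rsum (fun x => g x i) s P2)).
  pose proof (Rle_abs (- rsum (fun x => g x i) s P2)). rewrite Rabs_Ropp in *.
  apply Rabs_le. nra.
Qed.

(* Choosing [lam = 2 K_p] in [increment_bound] (or letting [lam -> 0] when [K_p = 0]). *)
Lemma holder_modulus n p L tau g k i s t : 0 < L -> 2 <= p -> primitive_of n L tau g ->
  is_Kp n p L g k -> (i < n)%nat -> 0 <= s <= L -> 0 <= t <= L ->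
  Rabs (tau t i - tau s i) <= 2 * k * Rabs (t - s) + L * k / Rpower 2 (p - 1).
Proof.
  intros HL Hp Hprim Hk Hi Hs Ht. destruct (Kp_energy n p L g k HL Hp Hk) as [Hk0 HI].
  pose proof (Rpower_pos 2 (p - 1)).
  assert (Gen : forall s t, 0 <= s <= t -> t <= L ->
            Rabs (tau t i - tau s i) <= 2 * k * (t - s) + L * k / Rpower 2 (p - 1)).
  { clear s t Hs Ht. intros s t Hst HtL. destruct (Req_dec k 0) as [->|Ek].
    - rewrite rpow_zero, Rmult_0_r in HI. apply Rle_plus_epsilon. intros eps Heps.
      destruct (Req_dec s t) as [<-|Est].
      { unfold Rminus. rewrite Rplus_opp_r, Rabs_R0. unfold Rdiv. lra. }
      pose proof (increment_bound n p L tau g 0 i s t (eps / (t - s)) Hp Hprim HI Hi Hst HtL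
                    ltac:(apply Rdiv_lt_0_compat; lra)) as Hinc.
      replace (eps / (t - s) * (t - s)) with eps in Hinc by (field; lra). unfold Rdiv in *. lra.
    - pose proof (increment_bound n p L tau g _ i s t (2 * k) Hp Hprim HI Hi Hst HtL ltac:(lra)) as Hinc.
      rewrite rpow_pos in Hinc by lra.
      replace (L * Rpower k p / Rpower (2 * k) (p - 1)) with (L * k / Rpower 2 (p - 1)) in Hinc; auto.
      rewrite <- Rpower_mult_distr, (Rpower_split k p) by lra.
      pose proof (Rpower_pos k (p - 1)). field; lra. }
  destruct (Rle_dec s t).
  - rewrite (Rabs_right (t - s)) by lra. apply Gen; lra.
  - rewrite (Rabs_left (t - s)), <- Rabs_Ropp by lra.
    replace (- (tau t i - tau s i)) with (tau s i - tau t i) by ring.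
    replace (- (t - s)) with (s - t) by ring. apply Gen; lra.
Qed.

Lemma oscillation_by_energy n p L tau g k i s t : 0 < L -> 2 <= p -> primitive_of n L tau g ->
  is_Kp n p L g k -> (i < n)%nat -> 0 <= s <= L -> 0 <= t <= L ->
  Rabs (tau t i - tau s i) <= 3 * L * k.
Proof.
  intros HL Hp Hprim Hk Hi Hs Ht.
  pose proof (holder_modulus n p L tau g k i s t HL Hp Hprim Hk Hi Hs Ht).
  destruct (Kp_energy n p L g k HL Hp Hk) as [Hk0 _].
  assert (Rabs (t - s) <= L) by (apply Rabs_le; lra).
  assert (/ Rpower 2 (p - 1) <= 1) by (pose proof (Rpower2_bound p ltac:(lra));
    apply Rle_trans with (2 / p); [lra|]; apply Rmult_le_reg_r with p; [lra|];
    unfold Rdiv; rewrite Rmult_assoc, Rinv_l; lra).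
  assert (2 * k * Rabs (t - s) <= 2 * k * L) by (apply Rmult_le_compat_l; lra).
  assert (L * k / Rpower 2 (p - 1) <= L * k) by (unfold Rdiv;
    rewrite <- (Rmult_1_r (L * k)) at 2; apply Rmult_le_compat_l; nra).
  lra.
Qed.

(** Smooth bump functions.
    On [(c,d)] the functions [Tf c d a b x = (x-c)^(-a) (d-x)^(-b) exp(-1/(x-c) - 1/(d-x))],
    extended by 0, are smooth; the derivative of each is an explicit linear combination of
    four of them, so every derivative of the bump [Tf c d 0 0] is a finite combination. *)
Module Bump.
Import Coquelicot.Coquelicot.

Lemma exp_INR_mult (m : nat) z : exp (INR m * z) = exp z ^ m.
Proof.
  induction m as [|m IH]; [simpl; rewrite Rmult_0_l, exp_0; auto|].
  rewrite S_INR, Rmult_plus_distr_r, Rmult_1_l, exp_plus, IH. simpl; ring.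
Qed.

Lemma poly_exp_bound (m : nat) : exists C, 0 < C /\ forall y, 0 < y -> y ^ m * exp (- y) <= C.
Proof.
  destruct m as [|m].
  { exists 1; split; [lra|]. intros y Hy. simpl. rewrite Rmult_1_l.
    rewrite <- exp_0. apply Rlt_le, exp_increasing; lra. }
  set (M := INR (S m)). assert (HM : 0 < M) by (apply lt_0_INR; lia).
  exists (M ^ S m); split; [apply pow_lt; auto|]. intros y Hy.
  assert (E : exp y = exp (y / M) ^ S m) by (rewrite <- exp_INR_mult; f_equal; fold M; field; lra).
  assert (H1 : y / M <= exp (y / M))
    by (pose proof (exp_ineq1_le (y / M)); assert (0 < y / M) by (apply Rdiv_lt_0_compat; lra); lra).
  assert (H2 : (y / M) ^ S m <= exp y)
    by (rewrite E; apply pow_incr; split; auto; apply Rlt_le, Rdiv_lt_0_compat; lra).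
  unfold Rdiv in H2. rewrite Rpow_mult_distr, pow_inv in H2.
  assert (0 < M ^ S m) by (apply pow_lt; auto). pose proof (exp_pos y).
  rewrite exp_Ropp. apply Rmult_le_reg_r with (exp y); auto. rewrite Rmult_assoc, Rinv_l by lra.
  apply Rmult_le_reg_r with (/ M ^ S m); [apply Rinv_0_lt_compat; auto|].
  replace (M ^ S m * exp y * / M ^ S m) with (exp y) by (field; lra). lra.
Qed.

Lemma profile_bounded (a : nat) : exists C, 0 < C /\ forall u, 0 < u -> 0 <= (/ u) ^ a * exp (- / u) <= C.
Proof.
  destruct (poly_exp_bound a) as [C [HC H]]. exists C; split; auto. intros u Hu.
  pose proof (Rinv_0_lt_compat _ Hu). split; [|apply H; auto].
  apply Rmult_le_pos; [apply pow_le; lra | apply Rlt_le, exp_pos].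
Qed.

Lemma profile_flat (a : nat) : exists C, 0 < C /\ forall u, 0 < u -> (/ u) ^ a * exp (- / u) <= C * u ^ 2.
Proof.
  destruct (profile_bounded (a + 2)) as [C [HC H]]. exists C; split; auto. intros u Hu.
  destruct (H u Hu) as [_ Hb]. rewrite pow_add in Hb. assert (0 < u ^ 2) by (apply pow_lt; lra).
  replace ((/ u) ^ a * exp (- / u)) with ((/ u) ^ a * (/ u) ^ 2 * exp (- / u) * u ^ 2).
  - apply Rmult_le_compat_r; lra.
  - assert (u <> 0) by lra. rewrite (pow_inv u 2). field. auto.
Qed.

Definition Gf (c d : R) (a b : nat) (x : R) : R :=
  (/ (x - c)) ^ a * (/ (d - x)) ^ b * exp (- / (x - c) - / (d - x)).
Definition Tf (c d : R) (a b : nat) (x : R) : R :=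
  if Rlt_dec c x then if Rlt_dec x d then Gf c d a b x else 0 else 0.
Definition DT (c d : R) (a b : nat) (x : R) : R :=
  - INR a * Tf c d (S a) b x + INR b * Tf c d a (S b) x
  + Tf c d (S (S a)) b x - Tf c d a (S (S b)) x.

Lemma Tf_out c d a b x : (x <= c \/ d <= x) -> Tf c d a b x = 0.
Proof. intros H. unfold Tf. destruct (Rlt_dec c x); auto. destruct (Rlt_dec x d); auto; lra. Qed.

Lemma Tf_in c d a b x : c < x < d -> Tf c d a b x = Gf c d a b x.
Proof. intros H. unfold Tf. destruct (Rlt_dec c x); [|lra]. destruct (Rlt_dec x d); auto; lra. Qed.

Lemma Gf_split c d a b x :
  Gf c d a b x = ((/ (x - c)) ^ a * exp (- / (x - c))) * ((/ (d - x)) ^ b * exp (- / (d - x))).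
Proof. unfold Gf. unfold Rminus at 3. rewrite exp_plus. ring. Qed.

Lemma Tf_bound c d a b : exists C, 0 < C /\ forall x, 0 <= Tf c d a b x <= C.
Proof.
  destruct (profile_bounded a) as [C1 [H1 K1]]. destruct (profile_bounded b) as [C2 [H2 K2]].
  exists (C1 * C2). split; [nra|]. intros x.
  destruct (Rlt_dec c x); [destruct (Rlt_dec x d)|].
  - rewrite Tf_in, Gf_split by lra.
    destruct (K1 (x - c)) as [? ?]; [lra|]. destruct (K2 (d - x)) as [? ?]; [lra|].
    split; [apply Rmult_le_pos | apply Rmult_le_compat]; auto.
  - rewrite Tf_out by lra. nra.
  - rewrite Tf_out by lra. nra.
Qed.

Lemma Tf_flat c d a b : exists C, 0 < C /\
  forall x, Rabs (Tf c d a b x) <= C * (x - c) ^ 2 /\ Rabs (Tf c d a b x) <= C * (x - d) ^ 2.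
Proof.
  destruct (profile_flat a) as [C1 [H1 F1]]; destruct (profile_bounded a) as [C1' [H1' B1]].
  destruct (profile_flat b) as [C2 [H2 F2]]; destruct (profile_bounded b) as [C2' [H2' B2]].
  exists (C1 * C2' + C1' * C2). split; [nra|]. intros x.
  destruct (Rlt_dec c x); [destruct (Rlt_dec x d)|];
    [| rewrite Tf_out, Rabs_R0 by lra; split; apply Rmult_le_pos; try nra; apply pow2_ge_0 ..].
  rewrite Tf_in, Gf_split by lra.
  destruct (B1 (x - c)) as [P1 Q1]; [lra|]. destruct (B2 (d - x)) as [P2 Q2]; [lra|].
  pose proof (F1 (x - c) ltac:(lra)). pose proof (F2 (d - x) ltac:(lra)).
  rewrite Rabs_right by (apply Rle_ge, Rmult_le_pos; auto).
  replace ((x - d) ^ 2) with ((d - x) ^ 2) by ring.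
  assert (0 <= (x - c) ^ 2) by apply pow2_ge_0. assert (0 <= (d - x) ^ 2) by apply pow2_ge_0.
  split.
  - apply Rle_trans with (C1 * (x - c) ^ 2 * C2'); [apply Rmult_le_compat; auto|].
    assert (0 <= C1' * C2 * (x - c) ^ 2) by (repeat apply Rmult_le_pos; lra). nra.
  - apply Rle_trans with (C1' * (C2 * (d - x) ^ 2)); [apply Rmult_le_compat; auto|].
    assert (0 <= C1 * C2' * (d - x) ^ 2) by (repeat apply Rmult_le_pos; lra). nra.
Qed.

Lemma flat_derivative f x0 C : 0 < C -> f x0 = 0 ->
  (forall x, Rabs (f x) <= C * (x - x0) ^ 2) -> derivable_pt_lim f x0 0.
Proof.
  intros HC Hf0 Hf eps Heps.
  assert (Hd : 0 < eps / C) by (apply Rdiv_lt_0_compat; lra).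
  exists (mkposreal _ Hd). simpl. intros h Hh0 Hh.
  rewrite Hf0, !Rminus_0_r. specialize (Hf (x0 + h)).
  replace ((x0 + h - x0) ^ 2) with (Rabs h * Rabs h) in Hf
    by (rewrite <- Rabs_mult, Rabs_right; [ring | apply Rle_ge; nra]).
  assert (0 < Rabs h) by (apply Rabs_pos_lt; auto).
  unfold Rdiv. rewrite Rabs_mult, Rabs_inv.
  apply Rle_lt_trans with (C * Rabs h).
  - apply Rmult_le_reg_r with (Rabs h); auto. rewrite Rmult_assoc, Rinv_l; lra.
  - apply Rmult_lt_reg_r with (/ C); [apply Rinv_0_lt_compat; lra|].
    replace (C * Rabs h * / C) with (Rabs h) by (field; lra). exact Hh.
Qed.

Lemma derivable_zero_near f x a b : a < x < b -> (forall y, a < y < b -> f y = 0) ->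
  derivable_pt_lim f x 0.
Proof.
  intros Hx Hf. apply derivable_pt_lim_locally_ext with (f := fun _ => 0) (a := a) (b := b); auto.
  - intros; symmetry; auto.
  - apply derivable_pt_lim_const.
Qed.

Lemma DT_out c d a b x : (x <= c \/ d <= x) -> DT c d a b x = 0.
Proof. intros H. unfold DT. rewrite !Tf_out by lra. ring. Qed.

(* [DT] is the derivative of [Tf] everywhere: by differentiation inside [(c,d)],
   by flatness at the endpoints, and trivially outside. *)
Lemma deriv_T c d a b x : c < d -> derivable_pt_lim (Tf c d a b) x (DT c d a b x).
Proof.
  intros Hcd. destruct (Tf_flat c d a b) as [C [HC Hflat]].
  destruct (Rlt_dec c x) as [Hcx|Hcx]; [destruct (Rlt_dec x d) as [Hxd|Hxd]|].
  -
    apply derivable_pt_lim_locally_ext with (f := Gf c d a b) (a := c) (b := d); auto.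
    { intros; rewrite Tf_in; auto. }
    apply is_derive_Reals. unfold DT. rewrite !Tf_in by lra. unfold Gf.
    auto_derive; [lra|].
    replace (exp (- / (x - c) - / (d - x))) with (exp (- / (x + - c) + - / (d + - x))) by (f_equal; ring).
    set (E := exp (- / (x + - c) + - / (d + - x))). clearbody E.
    assert (x - c <> 0) by lra. assert (d - x <> 0) by lra. unfold Rminus in *.
    destruct a as [|a]; destruct b as [|b]; simpl pred; rewrite ?S_INR; simpl INR; simpl pow;
      field; auto.
  - rewrite DT_out by lra. destruct (Req_dec x d) as [->|].
    + apply flat_derivative with C; auto; [apply Tf_out; lra | intros; apply Hflat].
    + apply derivable_zero_near with d (x + 1); [lra | intros; apply Tf_out; lra].
  - rewrite DT_out by lra. destruct (Req_dec x c) as [->|].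
    + apply flat_derivative with C; auto; [apply Tf_out; lra | intros; apply Hflat].
    + apply derivable_zero_near with (x - 1) c; [lra | intros; apply Tf_out; lra].
Qed.

Fixpoint ev (c d : R) (l : list (R * nat * nat)) (x : R) : R :=
  match l with nil => 0 | (k, a, b) :: l' => k * Tf c d a b x + ev c d l' x end.

Definition deriv_term (t : R * nat * nat) : list (R * nat * nat) :=
  let '(k, a, b) := t in
  (- INR a * k, S a, b) :: (INR b * k, a, S b) :: (k, S (S a), b) :: (- k, a, S (S b)) :: nil.

Lemma ev_deriv c d l x : c < d -> derivable_pt_lim (ev c d l) x (ev c d (flat_map deriv_term l) x).
Proof.
  intros Hcd. induction l as [|[[k a] b] l IH]; simpl; [apply derivable_pt_lim_const|].
  match goal with |- derivable_pt_lim _ x ?e =>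
    replace e with (k * DT c d a b x + ev c d (flat_map deriv_term l) x) by (unfold DT; ring) end.
  apply derivable_pt_lim_plus; auto. apply derivable_pt_lim_scal, deriv_T; auto.
Qed.

Definition bump_deriv (c d : R) (j : nat) : R -> R :=
  ev c d (Nat.iter j (flat_map deriv_term) ((1, 0%nat, 0%nat) :: nil)).

Lemma bump_deriv_0 c d x : bump_deriv c d 0 x = Tf c d 0 0 x.
Proof. unfold bump_deriv; simpl; ring. Qed.

Lemma bump_deriv_1 c d x : bump_deriv c d 1 x = Tf c d 2 0 x - Tf c d 0 2 x.
Proof. unfold bump_deriv; simpl; ring. Qed.

Lemma bump (c d : R) : c < d -> exists phi dphi,
  (exists D : nat -> R -> R, D O = phi /\ D 1%nat = dphi /\
     forall k x, derivable_pt_lim (D k) x (D (S k) x)) /\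
  (forall x, (x <= c \/ d <= x) -> phi x = 0) /\
  (forall x, 0 <= phi x <= 1) /\
  (exists B, forall x, Rabs (dphi x) <= B) /\
  (forall eta x, 0 < eta -> c + eta <= x <= d - eta -> exp (- (2 / eta)) <= phi x).
Proof.
  intros Hcd. exists (bump_deriv c d 0), (bump_deriv c d 1).
  split; [|split; [|split; [|split]]].
  - exists (bump_deriv c d). repeat split. intros k x. apply ev_deriv; auto.
  - intros x Hx. rewrite bump_deriv_0, Tf_out; auto.
  - intros x. rewrite bump_deriv_0.
    destruct (Rlt_dec c x); [destruct (Rlt_dec x d)|]; [| rewrite Tf_out by lra; lra ..].
    rewrite Tf_in by lra. unfold Gf. simpl. rewrite !Rmult_1_l.
    split; [apply Rlt_le, exp_pos|]. rewrite <- exp_0. apply Rlt_le, exp_increasing.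
    assert (0 < / (x - c)) by (apply Rinv_0_lt_compat; lra).
    assert (0 < / (d - x)) by (apply Rinv_0_lt_compat; lra). lra.
  - destruct (Tf_bound c d 2 0) as [C1 [HC1 H1]]. destruct (Tf_bound c d 0 2) as [C2 [HC2 H2]].
    exists (C1 + C2). intros x. specialize (H1 x). specialize (H2 x). rewrite bump_deriv_1.
    apply Rabs_le. lra.
  - intros eta x Heta Hx. rewrite bump_deriv_0, Tf_in by lra. unfold Gf. simpl. rewrite !Rmult_1_l.
    assert (/ (x - c) <= / eta) by (apply Rinv_le_contravar; lra).
    assert (/ (d - x) <= / eta) by (apply Rinv_le_contravar; lra).
    assert (Hle : - (2 / eta) <= - / (x - c) - / (d - x)) by (unfold Rdiv; lra).
    destruct (Rle_lt_or_eq_dec _ _ Hle) as [Hlt | ->]; [apply Rlt_le, exp_increasing, Hlt | lra].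
Qed.

End Bump.
Import Bump.

Lemma bv_bounded_above f ell : bounded_variation f 0 ell ->
  exists A, forall s, 0 <= s <= ell -> f s <= A.
Proof.
  intros [M HM]. exists (f 0 + M). intros s Hs.
  specialize (HM (fun i => match i with O => 0 | _ => s end) 1%nat). simpl in HM.
  assert (0 + Rabs (f s - f 0) <= M); [|pose proof (Rle_abs (f s - f 0)); lra].
  apply HM; intros [|[|i]] Hi; simpl; lra || lia.
Qed.

Definition clamp (a b x : R) : R := Rmax a (Rmin b x).

(* Intermediate value theorem for a function that is Lipschitz on [a,b]
   (extended to R by clamping, which keeps it continuous). *)
Lemma ivt_lipschitz f a b C y : a <= b -> 0 < C ->
  (forall x z, a <= x <= b -> a <= z <= b -> Rabs (f x - f z) <= C * Rabs (x - z)) ->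
  f a <= y <= f b -> exists z, a <= z <= b /\ f z = y.
Proof.
  intros Hab HC Hlip Hy.
  assert (Hcl : forall x, a <= clamp a b x <= b) by (intros; unfold clamp, Rmax, Rmin; unfold_minmax; lra).
  assert (Hin : forall x, a <= x <= b -> clamp a b x = x) by (intros; unfold clamp, Rmax, Rmin; unfold_minmax; lra).
  set (h := fun x => f (clamp a b x) - y).
  assert (Hcont : continuity h).
  { intros x eps Heps. exists (eps / C). split; [apply Rdiv_lt_0_compat; lra|].
    intros z [_ Hz]. simpl in *. unfold Rdist, h in *.
    replace (f (clamp a b z) - y - (f (clamp a b x) - y)) with (f (clamp a b z) - f (clamp a b x)) by ring.
    eapply Rle_lt_trans; [apply Hlip; auto|].
    assert (Rabs (clamp a b z - clamp a b x) <= Rabs (z - x)).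
    { unfold clamp, Rmax, Rmin; unfold_minmax; unfold Rabs;
        repeat match goal with |- context [Rcase_abs ?e] => destruct (Rcase_abs e) end; lra. }
    apply Rle_lt_trans with (C * Rabs (z - x)); [apply Rmult_le_compat_l; lra|].
    apply Rmult_lt_reg_r with (/ C); [apply Rinv_0_lt_compat; lra|].
    replace (C * Rabs (z - x) * / C) with (Rabs (z - x)) by (field; lra). exact Hz. }
  destruct (IVT_cor h a b Hcont Hab) as [z [Hz Ez]].
  { unfold h. rewrite !Hin by lra. nra. }
  exists z. split; auto. unfold h in Ez. rewrite Hin in Ez by auto. lra.
Qed.

Lemma weight_bounds (ell : R) (alpha psi beta : R -> R) (L : R) :
  0 < ell -> (forall s, 0 <= s <= ell -> 0 < alpha s) -> bounded_variation alpha 0 ell ->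
  (exists C, forall s, 0 <= s <= ell -> / alpha s <= C) ->
  (forall s, 0 <= s <= ell -> HKint (fun sigma => / alpha sigma) 0 s (psi s)) ->
  L = psi ell -> (forall s, 0 <= s <= ell -> beta (psi s) = alpha s) ->
  0 < L /\ exists cb Bb, 0 < cb /\ forall t, 0 <= t <= L -> cb <= beta t <= Bb.
Proof.
  intros Hell Hpos Hbv [C HC] Hpsi HL Hbeta.
  destruct (bv_bounded_above alpha ell Hbv) as [A HA].
  assert (HA0 : 0 < A) by (pose proof (HA 0 ltac:(lra)); pose proof (Hpos 0 ltac:(lra)); lra).
  assert (HC0 : 0 < C)
    by (pose proof (HC 0 ltac:(lra)); pose proof (Rinv_0_lt_compat _ (Hpos 0 ltac:(lra))); lra).
  assert (HlowA : forall s, 0 <= s <= ell -> / C <= alpha s).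
  { intros s Hs. rewrite <- (Rinv_inv (alpha s)).
    apply Rinv_le_contravar; auto. apply Rinv_0_lt_compat, Hpos; auto. }
  (* [psi] is bi-Lipschitz: its slope [1/alpha] lies in [1/A, C] *)
  assert (Hdiff : forall s s', 0 <= s <= s' -> s' <= ell ->
            / A * (s' - s) <= psi s' - psi s <= C * (s' - s)).
  { intros s s' H1 H2. apply HKint_increment_bounds with (f := fun sigma => / alpha sigma);
      try apply Hpsi; try lra.
    intros x Hx. split; [apply Rinv_le_contravar; [apply Hpos | apply HA]; lra | apply HC; lra]. }
  assert (Hpsi0 : psi 0 = 0) by (apply (HKint_point (fun sigma => / alpha sigma) 0), Hpsi; lra).
  assert (HL0 : 0 < L).
  { specialize (Hdiff 0 ell ltac:(lra) ltac:(lra)). pose proof (Rinv_0_lt_compat _ HA0). nra. }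
  split; auto. exists (/ C), A. split; [apply Rinv_0_lt_compat; auto|].
  intros t Ht. destruct (ivt_lipschitz psi 0 ell C t) as [s [Hs <-]]; try lra.
  - intros x z Hx Hz. destruct (Rle_dec x z).
    + pose proof (Hdiff x z ltac:(lra) ltac:(lra)). pose proof (Rinv_0_lt_compat _ HA0).
      rewrite !Rabs_left1 by nra. nra.
    + pose proof (Hdiff z x ltac:(lra) ltac:(lra)). pose proof (Rinv_0_lt_compat _ HA0).
      rewrite !Rabs_right by nra. nra.
  - rewrite Hbeta by auto. split; [apply HlowA | apply HA]; auto.
Qed.

(** The Euler-Lagrange system and the a priori bound on the multiplier. *)

Definition euler_lagrange (n : nat) (L mu p : R) (beta : R -> R) (tau0 tau g : R -> vec)
  (k : R) (Lam : vec) : Prop :=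
  weak_eq n L
    (fun t i => rpow (vnorm n (g t)) (p - 2) * g t i)
    (fun t i => rpow (vnorm n (g t)) p * tau t i)
    (fun t i => rpow k (p - 1) * beta t *
       (Lam i - dot n Lam (tau t) * tau t i - mu * tau0 t i + mu * dot n (tau0 t) (tau t) * tau t i)).

Lemma multiplier_projection n Lam mu (tau tau0 : vec) : 0 < vnorm n Lam ->
  dot n (unitv n Lam)
    (fun i => Lam i - dot n Lam tau * tau i - mu * tau0 i + mu * dot n tau0 tau * tau i)
  = vnorm n Lam * (1 - dot n (unitv n Lam) tau * dot n (unitv n Lam) tau)
    - mu * (dot n (unitv n Lam) tau0 - dot n tau0 tau * dot n (unitv n Lam) tau).
Proof.
  intros HLam. set (e := unitv n Lam).
  unfold dot at 1.
  rewrite (fsum_ext n _ (fun i => 1 * (e i * Lam i)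
      + (- dot n Lam tau + mu * dot n tau0 tau) * (e i * tau i) + (- mu) * (e i * tau0 i)))
    by (intros; ring).
  rewrite fsum_lin3. fold (dot n e Lam) (dot n e tau) (dot n e tau0).
  rewrite (unitv_scale n Lam tau) by auto. fold e.
  assert (Ee : dot n e Lam = vnorm n Lam).
  { rewrite dot_sym. unfold e. rewrite unitv_scale, unitv_dot by auto. ring. }
  rewrite Ee. ring.
Qed.

Lemma torque_bound n e u w : dot n e e = 1 -> dot n u u = 1 -> dot n w w = 1 ->
  Rabs (dot n e w - dot n w u * dot n e u) <= 2.
Proof.
  intros He Hu Hw.
  pose proof (dot_abs_le1 n e w He Hw). pose proof (dot_abs_le1 n e u He Hu).
  pose proof (dot_abs_le1 n w u Hw Hu).
  eapply Rle_trans; [apply Rabs_triang|]. rewrite Rabs_Ropp, Rabs_mult.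
  pose proof (Rabs_pos (dot n w u)). pose proof (Rabs_pos (dot n e u)). nra.
Qed.

Section RiemannSumBounds.
Variables (n : nat) (p L k : R) (g : R -> vec) (d : R -> R) (P : list (R * R)).
Hypotheses (Hk : 0 < k) (Hp : 2 <= p) (HP : fine d 0 L P)
  (Henergy : rsum (fun t => rpow (vnorm n (g t)) p) 0 P <= Rpower k p * (L + 1)).

Lemma flux_rsum_bound i B dphi : (i < n)%nat -> (forall x, Rabs (dphi x) <= B) ->
  Rabs (rsum (fun t => rpow (vnorm n (g t)) (p - 2) * g t i * dphi t) 0 P)
  <= B * (Rpower k (p - 1) * (2 * L + 1)).
Proof.
  intros Hi HB. set (Gp := fun t => rpow (vnorm n (g t)) p) in *.
  pose proof (Rpower_pos k p). pose proof (Rpower_pos k (p - 1)). pose proof (fine_le _ _ _ _ HP).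
  assert (B0 : 0 <= B) by (pose proof (HB 0); pose proof (Rabs_pos (dphi 0)); lra).
  eapply Rle_trans; [apply rsum_abs with d L; auto|].
  eapply Rle_trans.
  { apply rsum_le with (g := fun t => B * (Rpower k (p - 1) * (1 + / Rpower k p * Gp t))) (d := d) (b := L);
      auto.
    intros t _. rewrite Rabs_mult, Rmult_comm. apply Rmult_le_compat; try apply Rabs_pos; [apply HB|].
    rewrite Rabs_mult, (Rabs_right (rpow _ _)) by apply Rle_ge, rpow_nonneg.
    rewrite (Rmult_comm (/ _)). eapply Rle_trans; [|apply young_flux; auto; apply vnorm_nonneg].
    apply Rmult_le_compat_l; [apply rpow_nonneg | apply comp_le_vnorm; auto]. }
  rewrite rsum_scal, rsum_scal, rsum_plus, (rsum_const 1 _ 0 L P HP), rsum_scal.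
  apply Rmult_le_compat_l; auto. apply Rmult_le_compat_l; [lra|].
  assert (/ Rpower k p * rsum Gp 0 P <= L + 1); [|lra].
  apply Rmult_le_reg_l with (Rpower k p); auto. rewrite <- Rmult_assoc, Rinv_r; lra.
Qed.

Lemma power_rsum_bound (tau : R -> vec) phi i K : (i < n)%nat -> k <= K ->
  (forall t, 0 <= t <= L -> vnorm n (tau t) = 1) -> (forall x, 0 <= phi x <= 1) ->
  Rabs (rsum (fun t => rpow (vnorm n (g t)) p * tau t i * phi t) 0 P)
  <= Rpower k (p - 1) * ((L + 1) * K).
Proof.
  intros Hi HkK Htau Hphi. set (Gp := fun t => rpow (vnorm n (g t)) p) in *.
  pose proof (Rpower_pos k (p - 1)). pose proof (fine_le _ _ _ _ HP).
  eapply Rle_trans; [apply rsum_abs with d L; auto|].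
  eapply Rle_trans; [apply rsum_le with (g := Gp) (d := d) (b := L); auto|].
  - intros t Ht. unfold Gp. rewrite !Rabs_mult, (Rabs_right (rpow _ _)) by apply Rle_ge, rpow_nonneg.
    pose proof (comp_le_vnorm n (tau t) i Hi) as Hc. rewrite Htau in Hc by auto.
    pose proof (rpow_nonneg (vnorm n (g t)) p). specialize (Hphi t).
    rewrite (Rabs_right (phi t)) by lra. pose proof (Rabs_pos (tau t i)).
    assert (Rabs (tau t i) * phi t <= 1) by nra.
    rewrite Rmult_assoc. apply Rle_trans with (rpow (vnorm n (g t)) p * 1); [|lra].
    apply Rmult_le_compat_l; auto.
  - rewrite (Rpower_split k p) in Henergy by lra.
    assert (0 <= Rpower k (p - 1) * (L + 1)) by nra. nra.
Qed.

Lemma rhs_rsum_bound (tau : R -> vec) phi dphi (F : R -> R) i B K :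
  (i < n)%nat -> k <= K -> (forall t, 0 <= t <= L -> vnorm n (tau t) = 1) ->
  (forall x, 0 <= phi x <= 1) -> (forall x, Rabs (dphi x) <= B) ->
  Rabs (rsum (fun t => - (rpow (vnorm n (g t)) (p - 2) * g t i) * dphi t
                       + (rpow (vnorm n (g t)) p * tau t i - F t) * phi t) 0 P) < Rpower k (p - 1) ->
  Rabs (rsum (fun t => F t * phi t) 0 P) <= Rpower k (p - 1) * (B * (2 * L + 1) + (L + 1) * K + 1).
Proof.
  intros Hi HkK Htau Hphi HB Hres.
  pose proof (flux_rsum_bound i B dphi Hi HB).
  pose proof (power_rsum_bound tau phi i K Hi HkK Htau Hphi).
  set (V := rsum (fun t => rpow (vnorm n (g t)) (p - 2) * g t i * dphi t) 0 P) in *.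
  set (A := rsum (fun t => rpow (vnorm n (g t)) p * tau t i * phi t) 0 P) in *.
  set (W := rsum (fun t => - (rpow (vnorm n (g t)) (p - 2) * g t i) * dphi t
                          + (rpow (vnorm n (g t)) p * tau t i - F t) * phi t) 0 P) in *.
  replace (rsum (fun t => F t * phi t) 0 P) with (A - V - W).
  - eapply Rle_trans; [apply Rabs_triang|]. rewrite Rabs_Ropp.
    eapply Rle_trans; [apply Rplus_le_compat_r, Rabs_triang|]. rewrite Rabs_Ropp. lra.
  - unfold A, V, W.
    rewrite (rsum_ext (fun t => _ + _)
      (fun t => ((-1) * (rpow (vnorm n (g t)) (p - 2) * g t i * dphi t)
                 + rpow (vnorm n (g t)) p * tau t i * phi t) + (-1) * (F t * phi t))) by (intros; ring).
    rewrite !rsum_plus, !rsum_scal. ring.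
Qed.

End RiemannSumBounds.

Lemma projected_rhs_rsum n Lam mu kp1 (beta phi : R -> R) (tau tau0 : R -> vec) a P :
  0 < vnorm n Lam ->
  fsum n (fun i => unitv n Lam i * rsum (fun t => kp1 * beta t *
      (Lam i - dot n Lam (tau t) * tau t i - mu * tau0 t i + mu * dot n (tau0 t) (tau t) * tau t i)
      * phi t) a P)
  = kp1 * (vnorm n Lam * rsum (fun t => beta t * phi t *
             (1 - dot n (unitv n Lam) (tau t) * dot n (unitv n Lam) (tau t))) a P
           - mu * rsum (fun t => beta t * phi t *
             (dot n (unitv n Lam) (tau0 t) - dot n (tau0 t) (tau t) * dot n (unitv n Lam) (tau t))) a P).
Proof.
  intros HLam.
  rewrite (fsum_ext n _ (fun i => rsum (fun t => unitv n Lam i * (kp1 * beta t *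
      (Lam i - dot n Lam (tau t) * tau t i - mu * tau0 t i + mu * dot n (tau0 t) (tau t) * tau t i)
      * phi t)) a P)) by (intros; rewrite rsum_scal; auto).
  rewrite <- rsum_fsum.
  match goal with |- _ = kp1 * (?c * rsum ?X a P - mu * rsum ?Y a P) =>
    replace (kp1 * (c * rsum X a P - mu * rsum Y a P))
      with (rsum (fun t => kp1 * c * X t + (- (kp1 * mu)) * Y t) a P)
      by (rewrite rsum_plus, !rsum_scal; ring) end.
  apply rsum_ext. intros t.
  rewrite (fsum_ext n _ (fun i => (kp1 * beta t * phi t) * (unitv n Lam i
      * (Lam i - dot n Lam (tau t) * tau t i - mu * tau0 t i + mu * dot n (tau0 t) (tau t) * tau t i))))
    by (intros; ring).
  rewrite fsum_scal. fold (dot n (unitv n Lam) (fun i => Lam i - dot n Lam (tau t) * tau t i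
    - mu * tau0 t i + mu * dot n (tau0 t) (tau t) * tau t i)).
  rewrite multiplier_projection by auto. ring.
Qed.

Lemma torque_rsum_bound n e (tau tau0 : R -> vec) (beta phi : R -> R) Bb L d P :
  dot n e e = 1 -> fine d 0 L P ->
  (forall t, 0 <= t <= L -> vnorm n (tau t) = 1) -> (forall t, 0 <= t <= L -> vnorm n (tau0 t) = 1) ->
  (forall t, 0 <= t <= L -> 0 <= beta t <= Bb) -> (forall x, 0 <= phi x <= 1) ->
  Rabs (rsum (fun t => beta t * phi t *
          (dot n e (tau0 t) - dot n (tau0 t) (tau t) * dot n e (tau t))) 0 P) <= 2 * Bb * L.
Proof.
  intros He HP Htau Htau0 Hbeta Hphi.
  eapply Rle_trans; [apply rsum_abs with d L; auto|].
  replace (2 * Bb * L) with (2 * Bb * (L - 0)) by ring.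
  rewrite <- (rsum_const (2 * Bb) _ 0 L P HP). apply rsum_le with d L; auto.
  intros t Ht. rewrite !Rabs_mult. specialize (Hbeta t Ht). specialize (Hphi t).
  rewrite (Rabs_right (beta t)), (Rabs_right (phi t)) by lra.
  pose proof (torque_bound n e (tau t) (tau0 t) He (dot_unit _ _ (Htau t Ht)) (dot_unit _ _ (Htau0 t Ht))).
  pose proof (Rabs_pos (dot n e (tau0 t) - dot n (tau0 t) (tau t) * dot n e (tau t))).
  rewrite Rmult_assoc, (Rmult_comm 2 Bb).
  apply Rmult_le_compat; [lra | apply Rmult_le_pos; lra | lra | nra].
Qed.

(* A priori estimate: testing the equation against [phi e], the multiplier times
   the Riemann sums of [beta phi (1 - (e.tau)^2)] stays bounded independently of [p]. *)
Lemma multiplier_estimate n p L tau g k Lam mu tau0 beta phi dphi B Bb K :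
  0 < L -> 2 <= p ->
  (forall t, 0 <= t <= L -> vnorm n (tau t) = 1) -> (forall t, 0 <= t <= L -> vnorm n (tau0 t) = 1) ->
  is_Kp n p L g k -> 0 < k -> k <= K -> euler_lagrange n L mu p beta tau0 tau g k Lam ->
  test_fun 0 L phi dphi -> (forall x, 0 <= phi x <= 1) -> (forall x, Rabs (dphi x) <= B) ->
  (forall t, 0 <= t <= L -> 0 <= beta t <= Bb) -> 0 <= mu -> 0 < vnorm n Lam ->
  exists d, (forall t, 0 < d t) /\ forall P, fine d 0 L P ->
    vnorm n Lam * rsum (fun t => beta t * phi t *
      (1 - dot n (unitv n Lam) (tau t) * dot n (unitv n Lam) (tau t))) 0 P
    <= INR n * (B * (2 * L + 1) + (L + 1) * K + 1) + 2 * mu * Bb * L.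
Proof.
  intros HL Hp Htau Htau0 HK Hk0 HkK Heq Htest Hphi HB Hbeta Hmu HLam.
  destruct (Kp_energy n p L g k HL Hp HK) as [_ [_ HI]].
  set (kp1 := Rpower k (p - 1)). assert (Hkp1 : 0 < kp1) by apply Rpower_pos.
  pose proof (Rpower_pos k p) as Hkp.
  rewrite rpow_pos in HI by auto. unfold euler_lagrange in Heq. rewrite rpow_pos in Heq by auto.
  set (e := unitv n Lam). assert (He : dot n e e = 1) by (apply unitv_dot; auto).
  set (F := fun i t => kp1 * beta t * (Lam i - dot n Lam (tau t) * tau t i - mu * tau0 t i
                                       + mu * dot n (tau0 t) (tau t) * tau t i)).
  destruct (gauge_finite n 0 L (fun i P => Rabs (rsum (fun t =>
      - (rpow (vnorm n (g t)) (p - 2) * g t i) * dphi t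
      + (rpow (vnorm n (g t)) p * tau t i - F i t) * phi t) 0 P - 0) < kp1)) as [d1 [Hd1 K1]].
  { intros i Hi. destruct (Heq i Hi phi dphi Htest) as [_ H]. apply H; auto. }
  destruct (HI (Rpower k p) Hkp) as [d2 [Hd2 K2]].
  exists (gmin d1 d2). split; [apply gmin_pos; auto|]. intros P HP.
  specialize (K1 P (fine_gmin_l _ _ _ _ _ HP)). specialize (K2 P (fine_gmin_r _ _ _ _ _ HP)).
  apply Rabs_def2 in K2.
  assert (Henergy : rsum (fun t => rpow (vnorm n (g t)) p) 0 P <= Rpower k p * (L + 1)) by lra.
  assert (Hsum : Rabs (fsum n (fun i => e i * rsum (fun t => F i t * phi t) 0 P))
                 <= INR n * (kp1 * (B * (2 * L + 1) + (L + 1) * K + 1))).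
  { eapply Rle_trans; [apply fsum_abs|]. rewrite <- fsum_const. apply fsum_le. intros i Hi.
    rewrite Rabs_mult. pose proof (comp_abs_le1 n e i He Hi).
    specialize (K1 i Hi). rewrite Rminus_0_r in K1.
    pose proof (rhs_rsum_bound n p L k g _ P Hk0 Hp (fine_gmin_l _ _ _ _ _ HP) Henergy
                  tau phi dphi (F i) i B K Hi HkK Htau Hphi HB K1) as HFi. fold kp1 in HFi.
    pose proof (Rabs_pos (e i)). pose proof (Rabs_pos (rsum (fun t => F i t * phi t) 0 P)). nra. }
  unfold F, e in Hsum. rewrite projected_rhs_rsum, Rabs_mult, (Rabs_right kp1) in Hsum by lra.
  fold e in Hsum.
  pose proof (torque_rsum_bound n e tau tau0 beta phi Bb L _ P He HP Htau Htau0 Hbeta Hphi) as HY.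
  set (X := rsum (fun t => beta t * phi t * (1 - dot n e (tau t) * dot n e (tau t))) 0 P) in *.
  set (Y := rsum (fun t => beta t * phi t *
              (dot n e (tau0 t) - dot n (tau0 t) (tau t) * dot n e (tau t))) 0 P) in *.
  assert (Rabs (vnorm n Lam * X - mu * Y) <= INR n * (B * (2 * L + 1) + (L + 1) * K + 1))
    by (apply Rmult_le_reg_l with kp1; auto; lra).
  pose proof (Rle_abs (vnorm n Lam * X - mu * Y)).
  assert (mu * Y <= mu * (2 * Bb * L))
    by (apply Rmult_le_compat_l; [lra | pose proof (Rle_abs Y); lra]).
  lra.
Qed.

(** Extracting a uniformly convergent subsequence. *)

Definition diverges (ps : nat -> R) : Prop :=
  forall M, exists N, forall j, (N <= j)%nat -> M <= ps j.

Definition oscillation_vanishes (n : nat) (L : R) (tau : R -> R -> vec) (ps : nat -> R) : Prop :=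
  forall eps, 0 < eps -> exists N, forall j, (N <= j)%nat ->
    forall t s i, 0 <= t <= L -> 0 <= s <= L -> (i < n)%nat -> Rabs (tau (ps j) t i - tau (ps j) s i) < eps.

Lemma strict_incr_mono (f : nat -> nat) :
  (forall j, (f j < f (S j))%nat) -> forall a b, (a < b)%nat -> (f a < f b)%nat.
Proof. intros H a b Hab. induction Hab; [apply H | specialize (H m); lia]. Qed.

Lemma strict_incr_ge (f : nat -> nat) : (forall j, (f j < f (S j))%nat) -> forall j, (j <= f j)%nat.
Proof. intros H j. induction j; [lia | specialize (H j); lia]. Qed.

Lemma bolzano_subseq (u : nat -> R) : (forall j, Rabs (u j) <= 1) ->
  exists (f : nat -> nat) (l : R),
    (forall j, (f j < f (S j))%nat) /\ (forall j, Rabs (u (f j) - l) < / INR (S j)).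
Proof.
  intros Hu.
  destruct (Bolzano_Weierstrass u (fun c => -1 <= c <= 1) (compact_P3 (-1) 1)) as [l Hl].
  { intros j. specialize (Hu j). pose proof (Rle_abs (u j)). pose proof (Rle_abs (- u j)).
    rewrite Rabs_Ropp in *. lra. }
  assert (Hpick : forall Nm : nat * nat, exists q : nat,
             (fst Nm <= q)%nat /\ Rabs (u q - l) < / INR (S (snd Nm))).
  { intros [N m]. assert (Hpos : 0 < / INR (S m)) by (apply Rinv_0_lt_compat, lt_0_INR; lia).
    destruct (Hl (fun x => Rabs (x - l) < / INR (S m)) N) as [q [Hq1 Hq2]]; [|exists q; auto].
    exists (mkposreal _ Hpos). intros y Hy. exact Hy. }
  destruct (choice _ Hpick) as [pick Hp].
  set (f := fix f (j : nat) : nat :=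
              match j with O => pick (O, O) | S j' => pick (S (f j'), S j') end).
  exists f, l. split.
  - intros j. simpl. destruct (Hp (S (f j), S j)). simpl in *. lia.
  - intros [|j]; [apply (Hp (O, O)) | apply (Hp (S (f j), S j))].
Qed.

Lemma bolzano_subseq_vec (n : nat) (v : nat -> vec) : (forall j i, (i < n)%nat -> Rabs (v j i) <= 1) ->
  exists f : nat -> nat, (forall j, (f j < f (S j))%nat) /\ exists c : vec,
    forall i, (i < n)%nat -> forall eps, 0 < eps ->
      exists N, forall j, (N <= j)%nat -> Rabs (v (f j) i - c i) < eps.
Proof.
  intros Hv. enough (Gen : forall m, (m <= n)%nat -> exists f : nat -> nat,
    (forall j, (f j < f (S j))%nat) /\ exists c : vec, forall i, (i < m)%nat -> forall eps, 0 < eps ->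
      exists N, forall j, (N <= j)%nat -> Rabs (v (f j) i - c i) < eps) by (apply Gen; lia).
  induction m as [|m IH]; intros Hm.
  { exists S. split; [intros; lia|]. exists (fun _ => 0). intros; lia. }
  destruct (IH ltac:(lia)) as [f [Hf [c Hc]]].
  destruct (bolzano_subseq (fun j => v (f j) m)) as [g [l [Hg Hgl]]]; [intros; apply Hv; lia|].
  exists (fun j => f (g j)). split; [intros j; apply strict_incr_mono; auto|].
  exists (fun i => if Nat.eq_dec i m then l else c i). intros i Hi eps Heps.
  destruct (Nat.eq_dec i m) as [->|].
  - destruct (INR_unbounded (/ eps)) as [N HN]. exists N. intros j Hj.
    eapply Rlt_trans; [apply Hgl|]. apply Rle_lt_trans with (/ INR (S N)).
    + apply Rinv_le_contravar; [apply lt_0_INR; lia | apply le_INR; lia].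
    + rewrite <- (Rinv_inv eps). apply Rinv_lt_contravar.
      * apply Rmult_lt_0_compat; [apply Rinv_0_lt_compat; auto | apply lt_0_INR; lia].
      * rewrite S_INR. lra.
  - destruct (Hc i ltac:(lia) eps Heps) as [N HN]. exists N. intros j Hj. apply HN.
    pose proof (strict_incr_ge g Hg j). lia.
Qed.

Lemma eventually_finite (n : nat) (Q : nat -> nat -> Prop) :
  (forall i, (i < n)%nat -> exists N, forall j, (N <= j)%nat -> Q i j) ->
  exists N, forall i, (i < n)%nat -> forall j, (N <= j)%nat -> Q i j.
Proof.
  induction n as [|n IH]; intros H; [exists O; intros; lia|].
  destruct IH as [N1 K1]; [intros; apply H; lia|]. destruct (H n ltac:(lia)) as [N2 K2].
  exists (Nat.max N1 N2). intros i Hi j Hj.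
  destruct (Nat.eq_dec i n) as [->|]; [apply K2 | apply K1]; lia.
Qed.

(* Maps with vanishing oscillation have a subsequence converging uniformly to a constant:
   extract a convergent subsequence of the values at the midpoint. *)
Lemma constant_limit n L (tau : R -> R -> vec) : (0 < n)%nat -> 0 < L ->
  (forall p t, 2 <= p -> 0 <= t <= L -> vnorm n (tau p t) = 1) ->
  (exists ps, (forall j, 2 <= ps j) /\ diverges ps /\ oscillation_vanishes n L tau ps) ->
  exists ps' : nat -> R,
     (forall j, 2 <= ps' j) /\
     (forall M, exists N, forall j, (N <= j)%nat -> M <= ps' j) /\
     exists c : vec, forall eps, 0 < eps -> exists N, forall j, (N <= j)%nat ->
       forall t, 0 < t < L -> vnorm n (vsub (tau (ps' j) t) c) < eps.
Proof.
  intros Hn HL Hunit [ps [Hps2 [Hdiv Hosc]]].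
  destruct (bolzano_subseq_vec n (fun j => tau (ps j) (L / 2))) as [f [Hf [c Hc]]].
  { intros j i Hi. rewrite <- (Hunit (ps j) (L / 2)) by (auto; lra). apply comp_le_vnorm; auto. }
  pose proof (strict_incr_ge f Hf) as Hfge.
  exists (fun j => ps (f j)). split; [auto|split].
  { intros M. destruct (Hdiv M) as [N HN]. exists N. intros j Hj. apply HN. specialize (Hfge j). lia. }
  exists c. intros eps Heps. assert (0 < INR n) by (apply lt_0_INR; auto).
  set (e1 := eps / (2 * INR n + 1)). assert (He1 : 0 < e1) by (apply Rdiv_lt_0_compat; lra).
  destruct (Hosc e1 He1) as [N1 K1].
  destruct (eventually_finite n (fun i j => Rabs (tau (ps (f j)) (L / 2) i - c i) < e1)) as [N2 K2].
  { intros i Hi. apply Hc; auto. }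
  exists (Nat.max N1 N2). intros j Hj t Ht.
  eapply Rle_lt_trans; [apply vnorm_le_sum|].
  apply Rle_lt_trans with (fsum n (fun _ => 2 * e1)).
  - apply fsum_le. intros i Hi. unfold vsub.
    replace (tau (ps (f j)) t i - c i)
      with ((tau (ps (f j)) t i - tau (ps (f j)) (L / 2) i) + (tau (ps (f j)) (L / 2) i - c i)) by ring.
    eapply Rle_trans; [apply Rabs_triang|].
    assert (Rabs (tau (ps (f j)) t i - tau (ps (f j)) (L / 2) i) < e1)
      by (apply K1; try lra; auto; specialize (Hfge j); lia).
    assert (Rabs (tau (ps (f j)) (L / 2) i - c i) < e1) by (apply K2; auto; lia). lra.
  - rewrite fsum_const. unfold e1.
    apply Rmult_lt_reg_r with (2 * INR n + 1); [lra|].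
    replace (INR n * (2 * (eps / (2 * INR n + 1))) * (2 * INR n + 1)) with (INR n * 2 * eps)
      by (field; lra). nra.
Qed.

Lemma sign_chain (sg : R -> R) a b r : 0 < r -> a <= b ->
  (forall t, a <= t <= b -> / 2 < Rabs (sg t)) ->
  (forall t s, a <= t <= b -> a <= s <= b -> Rabs (t - s) <= r -> Rabs (sg t - sg s) < 1) ->
  forall t, a <= t <= b -> 0 < sg t * sg a.
Proof.
  intros Hr Hab Haway Hosc.
  assert (Same : forall t s, a <= t <= b -> a <= s <= b -> Rabs (t - s) <= r -> 0 < sg t * sg s).
  { intros t s Ht Hs Hts. specialize (Hosc t s Ht Hs Hts).
    pose proof (Haway t Ht). pose proof (Haway s Hs). revert Hosc H H0. unfold Rabs.
    repeat match goal with |- context [Rcase_abs ?e] => destruct (Rcase_abs e) end; intros; nra. }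
  (* induction on the number of steps of length [r] from [a] *)
  assert (Ind : forall N : nat, forall t, a <= t <= b -> t <= a + INR N * r -> 0 < sg t * sg a).
  { induction N as [|N IH]; intros t Ht HtN.
    - simpl in HtN. replace t with a by lra. apply Same; try lra. rewrite Rminus_diag, Rabs_R0; lra.
    - rewrite S_INR in HtN. destruct (Rle_dec t (a + INR N * r)); [apply IH; auto|].
      pose proof (pos_INR N). set (t' := Rmax a (t - r)).
      assert (a <= t' <= t) by (unfold t', Rmax; destruct (Rle_dec a (t - r)); lra).
      assert (Ht'N : t' <= a + INR N * r) by (unfold t', Rmax; destruct (Rle_dec a (t - r)); nra).
      assert (Rabs (t - t') <= r)
        by (unfold t', Rmax; destruct (Rle_dec a (t - r)); rewrite Rabs_right; lra).
      pose proof (IH t' ltac:(lra) Ht'N). pose proof (Same t t' Ht ltac:(lra) ltac:(auto)).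
      assert (0 < sg t' * sg t') by (pose proof (Haway t' ltac:(lra)); unfold Rabs in *;
                                     destruct (Rcase_abs (sg t')); nra).
      assert (0 < (sg t * sg a) * (sg t' * sg t')) by
        (replace ((sg t * sg a) * (sg t' * sg t')) with ((sg t * sg t') * (sg t' * sg a)) by ring;
         apply Rmult_lt_0_compat; auto).
      nra. }
  intros t Ht. destruct (INR_unbounded ((b - a) / r)) as [N HN].
  apply (Ind N); auto. apply Rmult_gt_compat_r with (r := r) in HN; auto.
  unfold Rdiv in HN. rewrite Rmult_assoc, Rinv_l in HN by lra. lra.
Qed.

Lemma aligned_sign (sg : R -> R) a b r delta : a <= b -> 0 < r -> delta <= 1 / 2 ->
  (forall t, a <= t <= b -> Rabs (sg t) <= 1 /\ 1 - sg t * sg t < delta) ->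
  (forall t s, a <= t <= b -> a <= s <= b -> Rabs (t - s) <= r -> Rabs (sg t - sg s) < 1) ->
  exists s0, s0 * s0 = 1 /\ forall t, a <= t <= b -> 1 - delta < s0 * sg t.
Proof.
  intros Hab Hr Hdelta Hal Hosc.
  assert (Hbig : forall t, a <= t <= b -> 1 - delta < Rabs (sg t)).
  { intros t Ht. destruct (Hal t Ht) as [H1 H2].
    assert (sg t * sg t = Rabs (sg t) * Rabs (sg t)) by (rewrite <- Rabs_mult, Rabs_right; nra).
    pose proof (Rabs_pos (sg t)). nra. }
  assert (Hsame : forall t, a <= t <= b -> 0 < sg t * sg a)
    by (apply sign_chain with r; auto; intros t Ht; pose proof (Hbig t Ht); lra).
  pose proof (Hbig a ltac:(lra)).
  exists (if Rlt_dec 0 (sg a) then 1 else -1). split; [destruct (Rlt_dec 0 (sg a)); ring|].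
  intros t Ht. pose proof (Hbig t Ht). pose proof (Hsame t Ht).
  destruct (Rlt_dec 0 (sg a)).
  - assert (0 < sg t) by nra. rewrite Rabs_right in * by lra. lra.
  - assert (sg a < 0) by (destruct (Req_dec (sg a) 0) as [E|E]; [rewrite E, Rabs_R0 in *|]; lra).
    assert (sg t < 0) by nra. rewrite Rabs_left in * by lra. lra.
Qed.

Lemma pairing_modulus n e (tau : R -> vec) L K theta : dot n e e = 1 ->
  (forall t s i, 0 <= t <= L -> 0 <= s <= L -> (i < n)%nat ->
     Rabs (tau t i - tau s i) <= 2 * K * Rabs (t - s) + theta) ->
  forall t s, 0 <= t <= L -> 0 <= s <= L ->
    Rabs (dot n e (tau t) - dot n e (tau s)) <= INR n * (2 * K * Rabs (t - s) + theta).
Proof.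
  intros He Hmod t s Ht Hs. eapply Rle_trans; [apply dot_diff_abs; auto|].
  rewrite <- fsum_const. apply fsum_le. intros; apply Hmod; auto.
Qed.

Lemma pairing_oscillation n e (tau : R -> vec) L K delta :
  (0 < n)%nat -> 0 < K -> 0 < delta -> dot n e e = 1 ->
  (forall t s i, 0 <= t <= L -> 0 <= s <= L -> (i < n)%nat ->
     Rabs (tau t i - tau s i) <= 2 * K * Rabs (t - s) + delta / (16 * INR n)) ->
  forall t s, 0 <= t <= L -> 0 <= s <= L -> Rabs (t - s) <= delta / (16 * INR n * K) ->
    Rabs (dot n e (tau t) - dot n e (tau s)) <= delta / 4.
Proof.
  intros Hn HK Hdelta He Hmod t s Ht Hs Hts. assert (0 < INR n) by (apply lt_0_INR; auto).
  eapply Rle_trans; [apply (pairing_modulus n e tau L K); auto|].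
  assert (Hlip : INR n * (2 * K * Rabs (t - s)) <= INR n * (2 * K * (delta / (16 * INR n * K)))).
  { apply Rmult_le_compat_l, Rmult_le_compat_l; lra. }
  replace (INR n * (2 * K * (delta / (16 * INR n * K)))) with (delta / 8) in Hlip by (field; lra).
  replace (INR n * (2 * K * Rabs (t - s) + delta / (16 * INR n)))
    with (INR n * (2 * K * Rabs (t - s)) + delta / 16) by (field; lra).
  lra.
Qed.

Lemma oscillation_from_interior n L (tau : R -> vec) c K theta eta eps :
  0 < eta -> 2 * eta <= L -> 0 <= K ->
  (forall t s i, 0 <= t <= L -> 0 <= s <= L -> (i < n)%nat ->
     Rabs (tau t i - tau s i) <= 2 * K * Rabs (t - s) + theta) ->
  2 * K * eta + theta <= eps / 4 ->
  (forall t i, eta <= t <= L - eta -> (i < n)%nat -> Rabs (tau t i - c i) < eps / 4) ->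
  forall t s i, 0 <= t <= L -> 0 <= s <= L -> (i < n)%nat -> Rabs (tau t i - tau s i) < eps.
Proof.
  intros Heta HetaL HK Hmod Hetath Hint.
  assert (Hall : forall t i, 0 <= t <= L -> (i < n)%nat -> Rabs (tau t i - c i) < eps / 2).
  { intros t i Ht Hi.
    set (t1 := Rmin (L - eta) (Rmax eta t)).
    assert (Ht1 : eta <= t1 <= L - eta) by (unfold t1, Rmin, Rmax; unfold_minmax; lra).
    assert (Hd : Rabs (t - t1) <= eta)
      by (apply Rabs_le; unfold t1, Rmin, Rmax; unfold_minmax; lra).
    pose proof (Hint t1 i Ht1 Hi). pose proof (Hmod t t1 i Ht ltac:(lra) Hi).
    assert (2 * K * Rabs (t - t1) <= 2 * K * eta) by (apply Rmult_le_compat_l; lra).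
    replace (tau t i - c i) with ((tau t i - tau t1 i) + (tau t1 i - c i)) by ring.
    eapply Rle_lt_trans; [apply Rabs_triang | lra]. }
  intros t s i Ht Hs Hi. pose proof (Hall t i Ht Hi). pose proof (Hall s i Hs Hi).
  replace (tau t i - tau s i) with ((tau t i - c i) - (tau s i - c i)) by ring.
  eapply Rle_lt_trans; [apply Rabs_triang|]. rewrite Rabs_Ropp. lra.
Qed.

Lemma nearly_constant_of_aligned n L (tau : R -> vec) e K theta eta delta eps :
  (0 < n)%nat -> 0 < eta -> 2 * eta <= L -> 0 < K -> 0 < eps ->
  dot n e e = 1 -> (forall t, 0 <= t <= L -> vnorm n (tau t) = 1) ->
  (forall t s i, 0 <= t <= L -> 0 <= s <= L -> (i < n)%nat ->
     Rabs (tau t i - tau s i) <= 2 * K * Rabs (t - s) + theta) ->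
  INR n * theta <= 1 / 4 -> delta <= 1 / 2 -> delta <= eps * eps / 32 ->
  2 * K * eta + theta <= eps / 4 ->
  (forall t, eta <= t <= L - eta -> 1 - dot n e (tau t) * dot n e (tau t) < delta) ->
  forall t s i, 0 <= t <= L -> 0 <= s <= L -> (i < n)%nat -> Rabs (tau t i - tau s i) < eps.
Proof.
  intros Hn Heta HetaL HK Heps He Htau Hmod Hth Hd1 Hd2 Hetath Hal.
  assert (Hn' : 0 < INR n) by (apply lt_0_INR; auto).
  set (sg := fun t => dot n e (tau t)).
  assert (Hsg1 : forall t, 0 <= t <= L -> Rabs (sg t) <= 1)
    by (intros; apply dot_abs_le1; auto; apply dot_unit; auto).
  destruct (aligned_sign sg eta (L - eta) (/ (8 * INR n * K)) delta) as [s0 [Hs0 Hpos]]; auto.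
  { lra. }
  { apply Rinv_0_lt_compat. nra. }
  { intros t Ht. split; [apply Hsg1; lra | apply Hal; auto]. }
  { intros t s Ht Hs Hts.
    eapply Rle_lt_trans; [apply (pairing_modulus n e tau L K theta); auto; lra|].
    assert (Hstep : 2 * K * Rabs (t - s) <= 2 * K * / (8 * INR n * K)) by (apply Rmult_le_compat_l; lra).
    replace (2 * K * / (8 * INR n * K)) with (/ (4 * INR n)) in Hstep by (field; lra).
    assert (INR n * (2 * K * Rabs (t - s)) <= 1 / 4); [|nra].
    apply Rle_trans with (INR n * / (4 * INR n)); [apply Rmult_le_compat_l; lra|].
    right; field; lra. }
  set (c := fun i => s0 * e i).
  assert (Hc : dot n c c = 1).
  { unfold c, dot. rewrite (fsum_ext n _ (fun i => (s0 * s0) * (e i * e i))) by (intros; ring).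
    rewrite fsum_scal. fold (dot n e e). rewrite He, Hs0. ring. }
  assert (Hint : forall t i, eta <= t <= L - eta -> (i < n)%nat -> Rabs (tau t i - c i) < eps / 4).
  { intros t i Ht Hi. pose proof (Hpos t Ht).
    pose proof (comp_close_of_dot n (tau t) c i (dot_unit _ _ (Htau t ltac:(lra))) Hc Hi) as Hcl.
    replace (dot n c (tau t)) with (s0 * sg t) in Hcl
      by (unfold c, sg, dot; rewrite <- fsum_scal; apply fsum_ext; intros; ring).
    apply Rabs_def1; nra. }
  intros t s i Ht Hs Hi.
  apply (oscillation_from_interior n L tau c K theta eta eps); auto; lra.
Qed.

(** The rigidity estimate for large multipliers. *)

Lemma misalignment_persists x y delta : Rabs x <= 1 -> Rabs y <= 1 -> Rabs (x - y) <= delta / 4 ->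
  delta <= 1 - y * y -> delta / 2 <= 1 - x * x.
Proof.
  intros Hx Hy Hxy Hd.
  assert (Rabs (x * x - y * y) <= delta / 2); [|pose proof (Rle_abs (x * x - y * y)); lra].
  replace (x * x - y * y) with ((x - y) * (x + y)) by ring.
  rewrite Rabs_mult. pose proof (Rabs_triang x y). pose proof (Rabs_pos (x - y)). nra.
Qed.

Section Rigidity.
Variables (n : nat) (L mu cb Bb K : R) (tau0 : R -> vec) (beta : R -> R).
Hypotheses (Hn : (0 < n)%nat) (HL : 0 < L) (Hcb : 0 < cb) (Hmu : 0 <= mu) (HK : 0 < K)
  (Hbeta : forall t, 0 <= t <= L -> cb <= beta t <= Bb)
  (Htau0 : forall t, 0 <= t <= L -> vnorm n (tau0 t) = 1).

Lemma multiplier_bound_from_window p tau g k Lam phi dphi B t0 r m :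
  2 <= p -> (forall t, 0 <= t <= L -> vnorm n (tau t) = 1) -> is_Kp n p L g k -> 0 < k -> k <= K ->
  euler_lagrange n L mu p beta tau0 tau g k Lam ->
  test_fun 0 L phi dphi -> (forall x, 0 <= phi x <= 1) -> (forall x, Rabs (dphi x) <= B) ->
  0 < vnorm n Lam -> 0 < r -> 0 <= t0 - r -> t0 + r <= L -> 0 < m ->
  (forall t, t0 - r <= t <= t0 + r ->
     m <= beta t * phi t * (1 - dot n (unitv n Lam) (tau t) * dot n (unitv n Lam) (tau t))) ->
  vnorm n Lam <= (INR n * (B * (2 * L + 1) + (L + 1) * K + 1) + 2 * mu * Bb * L) / (m * r).
Proof.
  intros Hp Htau HKp Hk0 HkK Heq Htest Hphi HB HnL Hr Hr0 HrL Hm Hwin.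
  set (Cst := INR n * (B * (2 * L + 1) + (L + 1) * K + 1) + 2 * mu * Bb * L).
  set (e := unitv n Lam). assert (He : dot n e e = 1) by (apply unitv_dot; auto).
  destruct (multiplier_estimate n p L tau g k Lam mu tau0 beta phi dphi B Bb K HL Hp Htau Htau0 HKp
              Hk0 HkK Heq Htest Hphi HB ltac:(intros t Ht; pose proof (Hbeta t Ht); lra) Hmu HnL)
    as [d [Hd Kd]].
  set (dd := gmin d (fun _ => r / 2)).
  destruct (cousin dd 0 L ltac:(apply gmin_pos; auto; intros; lra) ltac:(lra)) as [P HP].
  specialize (Kd P (fine_gmin_l _ _ _ _ _ HP)). fold e Cst in Kd.
  assert (Low : m * r <= rsum (fun t => beta t * phi t * (1 - dot n e (tau t) * dot n e (tau t))) 0 P).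
  { apply rsum_lower_window with dd L t0; auto; try lra; [intros; apply Rmin_r|].
    intros t Ht. pose proof (Hbeta t Ht). pose proof (Hphi t).
    pose proof (dot_abs_le1 n e (tau t) He (dot_unit _ _ (Htau t Ht))) as Hsg.
    assert (dot n e (tau t) * dot n e (tau t) <= 1)
      by (pose proof (Rabs_pos (dot n e (tau t)));
          rewrite <- (Rabs_right (_ * _)), Rabs_mult by nra; nra).
    apply Rmult_le_pos; nra. }
  assert (vnorm n Lam * (m * r) <= Cst) by (eapply Rle_trans; [apply Rmult_le_compat_l|]; eauto; lra).
  apply Rmult_le_reg_r with (m * r); [nra|].
  unfold Rdiv. rewrite Rmult_assoc, Rinv_l by nra. lra.
Qed.

(* Step 1: if the multiplier is large, [tau] is nearly parallel to [Lam] in the interior.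
   Otherwise [1 - (e.tau)^2 >= delta/2] on a window of fixed length where the bump
   is bounded below, and [multiplier_bound_from_window] bounds [|Lam|]. *)
Lemma interior_alignment eta delta : 0 < eta -> 4 * eta <= L -> 0 < delta ->
  exists Thr, forall p tau g k Lam, 2 <= p ->
   (forall t, 0 <= t <= L -> vnorm n (tau t) = 1) -> is_Kp n p L g k -> 0 < k -> k <= K ->
   euler_lagrange n L mu p beta tau0 tau g k Lam ->
   (forall t s i, 0 <= t <= L -> 0 <= s <= L -> (i < n)%nat ->
      Rabs (tau t i - tau s i) <= 2 * K * Rabs (t - s) + delta / (16 * INR n)) ->
   Thr < vnorm n Lam ->
   forall t0, eta <= t0 <= L - eta ->
     1 - dot n (unitv n Lam) (tau t0) * dot n (unitv n Lam) (tau t0) < delta.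
Proof.
  intros Heta HetaL Hdelta. assert (Hn' : 0 < INR n) by (apply lt_0_INR; auto).
  destruct (bump (eta / 4) (L - eta / 4) ltac:(lra)) as (phi & dphi & HD & Hsupp & Hphi & [B HB] & Hlow).
  assert (Htest : test_fun 0 L phi dphi).
  { split; auto. exists (eta / 4), (L - eta / 4). repeat split; try lra. intros; apply Hsupp; lra. }
  set (r := Rmin (eta / 2) (delta / (16 * INR n * K))).
  assert (Hr : 0 < r) by (apply Rmin_glb_lt; [lra | apply Rdiv_lt_0_compat; nra]).
  assert (Hr1 : r <= eta / 2) by apply Rmin_l. assert (Hr2 : r <= delta / (16 * INR n * K)) by apply Rmin_r.
  set (m := cb * exp (- (2 / (eta / 4))) * (delta / 2)).
  assert (Hm : 0 < m) by (apply Rmult_lt_0_compat; [apply Rmult_lt_0_compat; auto; apply exp_pos | lra]).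
  set (Cst := INR n * (B * (2 * L + 1) + (L + 1) * K + 1) + 2 * mu * Bb * L).
  exists (Rmax 0 (Cst / (m * r))).
  intros p tau g k Lam Hp Htau HKp Hk0 HkK Heq Hmod HLam t0 Ht0.
  pose proof (Rmax_l 0 (Cst / (m * r))). pose proof (Rmax_r 0 (Cst / (m * r))).
  set (e := unitv n Lam). set (sg := fun t => dot n e (tau t)).
  assert (He : dot n e e = 1) by (apply unitv_dot; lra).
  assert (Hsg1 : forall t, 0 <= t <= L -> Rabs (sg t) <= 1)
    by (intros; apply dot_abs_le1; auto; apply dot_unit; auto).
  change (1 - sg t0 * sg t0 < delta). apply Rnot_le_lt. intros Hfar.
  assert (vnorm n Lam <= Cst / (m * r)); [|lra].
  apply (multiplier_bound_from_window p tau g k Lam phi dphi B t0 r m); auto; try lra.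
  intros t Htr. change (m <= beta t * phi t * (1 - sg t * sg t)). assert (Ht : 0 <= t <= L) by lra.
  assert (Hclose : Rabs (t - t0) <= delta / (16 * INR n * K)) by (apply Rabs_le; lra).
  pose proof (pairing_oscillation n e tau L K delta Hn HK Hdelta He Hmod t t0 Ht ltac:(lra) Hclose)
    as Hpair.
  pose proof (misalignment_persists (sg t) (sg t0) delta (Hsg1 t Ht) (Hsg1 t0 ltac:(lra)) Hpair Hfar).
  pose proof (Hbeta t Ht). assert (exp (- (2 / (eta / 4))) <= phi t) by (apply Hlow; lra).
  assert (cb * exp (- (2 / (eta / 4))) <= beta t * phi t)
    by (apply Rmult_le_compat; try lra; apply Rlt_le, exp_pos).
  unfold m. apply Rmult_le_compat; [apply Rmult_le_pos; [lra | apply Rlt_le, exp_pos] | lra | lra | lra].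
Qed.

Lemma multiplier_rigidity eps : 0 < eps -> exists theta, 0 < theta /\ exists Thr,
  forall p tau g k Lam, 2 <= p ->
   (forall t, 0 <= t <= L -> vnorm n (tau t) = 1) -> is_Kp n p L g k -> 0 < k -> k <= K ->
   euler_lagrange n L mu p beta tau0 tau g k Lam ->
   (forall t s i, 0 <= t <= L -> 0 <= s <= L -> (i < n)%nat ->
      Rabs (tau t i - tau s i) <= 2 * K * Rabs (t - s) + theta) ->
   Thr < vnorm n Lam ->
   forall t s i, 0 <= t <= L -> 0 <= s <= L -> (i < n)%nat -> Rabs (tau t i - tau s i) < eps.
Proof.
  intros Heps. assert (Hn' : 0 < INR n) by (apply lt_0_INR; auto).
  set (delta := Rmin (1 / 2) (eps * eps / 32)).
  assert (0 < delta) by (apply Rmin_glb_lt; nra).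
  assert (delta <= 1 / 2) by apply Rmin_l. assert (delta <= eps * eps / 32) by apply Rmin_r.
  set (eta := Rmin (L / 4) (eps / (16 * K))).
  assert (0 < eta) by (apply Rmin_glb_lt; [lra | apply Rdiv_lt_0_compat; lra]).
  assert (eta <= L / 4) by apply Rmin_l. assert (eta <= eps / (16 * K)) by apply Rmin_r.
  set (theta := Rmin (delta / (16 * INR n)) (eps / 16)).
  assert (0 < theta) by (apply Rmin_glb_lt; apply Rdiv_lt_0_compat; lra).
  assert (Hth1 : theta <= delta / (16 * INR n)) by apply Rmin_l.
  assert (theta <= eps / 16) by apply Rmin_r.
  destruct (interior_alignment eta delta) as [Thr HThr]; try lra.
  exists theta. split; auto. exists (Rmax Thr 0).
  intros p tau g k Lam Hp Htau HKp Hk0 HkK Heq Hmod HLam.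
  pose proof (Rmax_l Thr 0). pose proof (Rmax_r Thr 0).
  assert (Hmod' : forall t s i, 0 <= t <= L -> 0 <= s <= L -> (i < n)%nat ->
            Rabs (tau t i - tau s i) <= 2 * K * Rabs (t - s) + delta / (16 * INR n))
    by (intros t s i Ht Hs Hi; pose proof (Hmod t s i Ht Hs Hi); lra).
  apply (nearly_constant_of_aligned n L tau (unitv n Lam) K theta eta delta eps); auto; try lra.
  - apply unitv_dot. lra.
  - apply Rle_trans with (INR n * (delta / (16 * INR n))); [apply Rmult_le_compat_l; lra|].
    replace (INR n * (delta / (16 * INR n))) with (delta / 16) by (field; lra). lra.
  - assert (Heta2 : 2 * K * eta <= 2 * K * (eps / (16 * K))) by (apply Rmult_le_compat_l; lra).
    replace (2 * K * (eps / (16 * K))) with (eps / 8) in Heta2 by (field; lra). lra.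
  - intros t Ht. apply (HThr p tau g k Lam); auto; lra.
Qed.

End Rigidity.

Lemma small_tail L K p theta : 0 < L -> 0 <= K -> 0 < theta -> 2 <= p -> 2 * L * K / theta <= p ->
  L * K / Rpower 2 (p - 1) <= theta.
Proof.
  intros HL HK Hth Hp Hbig. pose proof (Rpower2_bound p ltac:(lra)).
  assert (2 * L * K <= theta * p).
  { apply Rmult_le_compat_r with (r := theta) in Hbig; [|lra].
    unfold Rdiv in Hbig. rewrite Rmult_assoc, Rinv_l in Hbig by lra. lra. }
  apply Rle_trans with (L * K * (2 / p)); [apply Rmult_le_compat_l; [nra | lra]|].
  apply Rmult_le_reg_r with p; [lra|]. unfold Rdiv.
  replace (L * K * (2 * / p) * p) with (2 * L * K) by (field; lra). lra.
Qed.

Lemma near_lipschitz_modulus n p L tau g k K theta i s t : 0 < L -> 2 <= p ->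
  primitive_of n L tau g -> is_Kp n p L g k -> k <= K -> 0 < theta -> 2 * L * K / theta <= p ->
  (i < n)%nat -> 0 <= s <= L -> 0 <= t <= L ->
  Rabs (tau t i - tau s i) <= 2 * K * Rabs (t - s) + theta.
Proof.
  intros HL Hp Hprim Hk HkK Hth Hbig Hi Hs Ht.
  eapply Rle_trans; [apply (holder_modulus n p L tau g k); auto|].
  destruct (Kp_energy n p L g k HL Hp Hk) as [Hk0 _].
  pose proof (Rabs_pos (t - s)).
  assert (L * k / Rpower 2 (p - 1) <= L * K / Rpower 2 (p - 1))
    by (unfold Rdiv; apply Rmult_le_compat_r; [apply Rlt_le, Rinv_0_lt_compat, Rpower_pos | nra]).
  assert (L * K / Rpower 2 (p - 1) <= theta) by (apply small_tail; auto; lra).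
  nra.
Qed.

Lemma vanishing_energy_case n L (tau dtau : R -> R -> vec) (k : R -> R) : 0 < L ->
  (forall p, 2 <= p -> W1p_sphere n p L (tau p) (dtau p)) ->
  (forall p, 2 <= p -> is_Kp n p L (dtau p) (k p)) ->
  (forall kap, 0 < kap -> forall Q, exists p, Q <= p /\ 2 <= p /\ k p < kap) ->
  exists ps, (forall j, 2 <= ps j) /\ diverges ps /\ oscillation_vanishes n L tau ps.
Proof.
  intros HL Htau Hk Hsmall.
  destruct (choice (fun (j : nat) p => INR j <= p /\ 2 <= p /\ k p < / INR (S j))) as [ps Hps].
  { intros j. apply Hsmall. apply Rinv_0_lt_compat, lt_0_INR; lia. }
  exists ps. split; [intros j; apply Hps|split].
  { intros M. destruct (INR_unbounded M) as [N HN]. exists N. intros j Hj.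
    pose proof (le_INR _ _ Hj). pose proof (Hps j). lra. }
  intros eps Heps. destruct (INR_unbounded (3 * L / eps)) as [N HN]. exists N.
  intros j Hj t s i Ht Hs Hi. destruct (Hps j) as (_ & Hp & Hkj).
  destruct (Htau (ps j) Hp) as [Hprim _].
  eapply Rle_lt_trans; [apply (oscillation_by_energy n (ps j) L _ (dtau (ps j)) (k (ps j))); auto|].
  assert (Hj' : INR N + 1 <= INR (S j)) by (rewrite S_INR; apply Rplus_le_compat_r, le_INR; auto).
  assert (HS : 0 < INR (S j)) by (apply lt_0_INR; lia).
  assert (k (ps j) * INR (S j) < 1).
  { apply Rmult_lt_reg_r with (/ INR (S j)); [apply Rinv_0_lt_compat; auto|].
    rewrite Rmult_assoc, Rinv_r, Rmult_1_l, Rmult_1_r by lra. auto. }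
  assert (3 * L < eps * INR (S j)).
  { apply Rmult_lt_reg_r with (/ eps); [apply Rinv_0_lt_compat; auto|].
    replace (eps * INR (S j) * / eps) with (INR (S j)) by (field; lra). unfold Rdiv in HN. lra. }
  destruct (Kp_energy n (ps j) L (dtau (ps j)) (k (ps j)) HL Hp (Hk _ Hp)). nra.
Qed.

Lemma large_multiplier_case n L mu cb Bb (tau0 : R -> vec) (beta : R -> R)
  (tau dtau : R -> R -> vec) (k : R -> R) (Lam : R -> vec) kap Q K P0 :
  (0 < n)%nat -> 0 < L -> 0 < cb -> 0 <= mu ->
  (forall t, 0 <= t <= L -> cb <= beta t <= Bb) -> (forall t, 0 <= t <= L -> vnorm n (tau0 t) = 1) ->
  (forall p, 2 <= p -> W1p_sphere n p L (tau p) (dtau p)) ->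
  (forall p, 2 <= p -> is_Kp n p L (dtau p) (k p)) ->
  (forall p, 2 <= p -> euler_lagrange n L mu p beta tau0 (tau p) (dtau p) (k p) (Lam p)) ->
  0 < kap -> (forall p, Q <= p -> 2 <= p -> kap <= k p) ->
  0 < K -> (forall p, P0 <= p -> k p <= K) ->
  (forall M Q, exists p, Q <= p /\ M < vnorm n (Lam p)) ->
  exists ps, (forall j, 2 <= ps j) /\ diverges ps /\ oscillation_vanishes n L tau ps.
Proof.
  intros Hn HL Hcb Hmu Hbeta Htau0 Htau Hk Heq Hkap HQ HK HP0 Hunb.
  set (P1 := Rmax 2 (Rmax P0 Q)).
  assert (2 <= P1 /\ P0 <= P1 /\ Q <= P1) as (HP1a & HP1b & HP1c)
    by (unfold P1; pose proof (Rmax_l 2 (Rmax P0 Q)); pose proof (Rmax_r 2 (Rmax P0 Q));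
        pose proof (Rmax_l P0 Q); pose proof (Rmax_r P0 Q); lra).
  destruct (choice (fun (j : nat) p => Rmax (INR j) P1 <= p /\ INR j < vnorm n (Lam p))) as [ps Hps].
  { intros j. apply Hunb. }
  assert (Hps' : forall j, INR j <= ps j /\ P1 <= ps j)
    by (intros j; pose proof (Rmax_l (INR j) P1); pose proof (Rmax_r (INR j) P1);
        pose proof (Hps j); lra).
  exists ps. split; [intros j; pose proof (Hps' j); lra|split].
  { intros M. destruct (INR_unbounded M) as [N HN]. exists N. intros j Hj.
    pose proof (le_INR _ _ Hj). pose proof (Hps' j). lra. }
  intros eps Heps.
  destruct (multiplier_rigidity n L mu cb Bb K tau0 beta Hn HL Hcb Hmu HK Hbeta Htau0 eps Heps)
    as [theta [Hth [Thr Hrig]]].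
  destruct (INR_unbounded (Rmax Thr (2 * L * K / theta))) as [N HN]. exists N.
  pose proof (Rmax_l Thr (2 * L * K / theta)). pose proof (Rmax_r Thr (2 * L * K / theta)).
  intros j Hj. pose proof (le_INR _ _ Hj). destruct (Hps' j) as [Hpj HP1j]. destruct (Hps j) as [_ HLj].
  assert (Hp : 2 <= ps j) by lra. destruct (Htau (ps j) Hp) as (Hprim & _ & Hunit).
  apply (Hrig (ps j) (tau (ps j)) (dtau (ps j)) (k (ps j)) (Lam (ps j))); auto.
  - pose proof (HQ (ps j) ltac:(lra) Hp). lra.
  - apply HP0. lra.
  - intros t s i Ht Hs Hi. apply (near_lipschitz_modulus n (ps j) L _ (dtau (ps j)) (k (ps j))); auto.
    + apply HP0. lra.
    + lra.
  - lra.
Qed.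

Lemma unbounded_of_not_bounded (f : R -> R) :
  ~ (exists M P0, forall p, P0 <= p -> f p / p ^ 6 <= M) -> forall M Q, exists p, Q <= p /\ M < f p.
Proof.
  intros Hnb M Q. apply NNPP. intros Hno. apply Hnb.
  exists (Rmax M 0), (Rmax Q 1). intros p Hp.
  pose proof (Rmax_l Q 1). pose proof (Rmax_r Q 1). pose proof (Rmax_l M 0). pose proof (Rmax_r M 0).
  assert (Hf : f p <= M) by (apply Rnot_lt_le; intros Hlt; apply Hno; exists p; split; [lra | auto]).
  assert (H6 : 1 <= p ^ 6) by (apply pow_R1_Rle; lra).
  apply Rmult_le_reg_r with (p ^ 6); [lra|]. unfold Rdiv. rewrite Rmult_assoc, Rinv_l by lra.
  destruct (Rle_dec (f p) 0); nra.
Qed.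

Lemma eventually_bounded_below (k : R -> R) :
  ~ (forall kap, 0 < kap -> forall Q, exists p, Q <= p /\ 2 <= p /\ k p < kap) ->
  exists kap, 0 < kap /\ exists Q, forall p, Q <= p -> 2 <= p -> kap <= k p.
Proof.
  intros Hns. apply NNPP. intros Hno. apply Hns. intros kap Hkap Q. apply NNPP. intros Hp.
  apply Hno. exists kap. split; auto. exists Q. intros p HQp H2p.
  apply Rnot_lt_le. intros Hlt. apply Hp. exists p. auto.
Qed.

Theorem mainTheorem6
  (n : nat) (ell : R) (alpha psi beta : R -> R) (L mu : R)
  (tau0 dtau0 : R -> vec) (tau dtau : R -> R -> vec) (k : R -> R) (Lam : R -> vec)
  (Hn : (2 <= n)%nat)
  (Hell : 0 < ell)
  (Halpha_pos : forall s, 0 <= s <= ell -> 0 < alpha s)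
  (Halpha_bv : bounded_variation alpha 0 ell)
  (Halpha_inv : exists C, forall s, 0 <= s <= ell -> / alpha s <= C)
  (Hpsi : forall s, 0 <= s <= ell -> HKint (fun sigma => / alpha sigma) 0 s (psi s))
  (HL : L = psi ell)
  (Hbeta : forall s, 0 <= s <= ell -> beta (psi s) = alpha s)
  (Hmu : 0 <= mu)
  (Htau0 : W1inf_sphere n L tau0 dtau0)
  (Htau : forall p, 2 <= p -> W1p_sphere n p L (tau p) (dtau p))
  (Hk : forall p, 2 <= p -> is_Kp n p L (dtau p) (k p))
  (Hklim : exists M P0, forall p, P0 <= p -> k p <= M)
  (Heq : forall p, 2 <= p ->
     weak_eq n L
       (fun t i => rpow (vnorm n (dtau p t)) (p - 2) * dtau p t i)
       (fun t i => rpow (vnorm n (dtau p t)) p * tau p t i)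
       (fun t i => rpow (k p) (p - 1) * beta t *
          (Lam p i - dot n (Lam p) (tau p t) * tau p t i
           - mu * tau0 t i + mu * dot n (tau0 t) (tau p t) * tau p t i))) :
  (exists M P0, forall p, P0 <= p -> vnorm n (Lam p) / p ^ 6 <= M)
  \/
  (exists ps : nat -> R,
     (forall j, 2 <= ps j) /\
     (forall M, exists N, forall j, (N <= j)%nat -> M <= ps j) /\
     exists c : vec, forall eps, 0 < eps -> exists N, forall j, (N <= j)%nat ->
       forall t, 0 < t < L -> vnorm n (vsub (tau (ps j) t) c) < eps).
Proof.
  destruct (weight_bounds ell alpha psi beta L Hell Halpha_pos Halpha_bv Halpha_inv Hpsi HL Hbeta)
    as [HL0 [cb [Bb [Hcb Hbb]]]].
  destruct Htau0 as (_ & _ & Hunit0).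
  destruct (classic (exists M P0, forall p, P0 <= p -> vnorm n (Lam p) / p ^ 6 <= M))
    as [Hbounded | Hunbounded]; [left; exact Hbounded | right].
  (* it suffices to make the oscillation of [tau_p] vanish along a sequence [p -> oo] *)
  apply constant_limit; [lia | exact HL0 | intros p t Hp; apply (Htau p Hp) |].
  destruct (classic (forall kap, 0 < kap -> forall Q, exists p, Q <= p /\ 2 <= p /\ k p < kap))
    as [Hsmall | Hlarge].
  - exact (vanishing_energy_case n L tau dtau k HL0 Htau Hk Hsmall).
  - destruct (eventually_bounded_below k Hlarge) as [kap [Hkap [Q HQ]]].
    destruct Hklim as [M [P0 HM]].
    (* [Heq] is [euler_lagrange] unfolded *)
    apply (large_multiplier_case n L mu cb Bb tau0 beta tau dtau k Lam kap Q (Rabs M + 1) P0);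
      auto; [lia | pose proof (Rabs_pos M); lra | | ].
    + intros p Hp. pose proof (HM p Hp). pose proof (Rle_abs M). lra.
    + exact (unbounded_of_not_bounded (fun p => vnorm n (Lam p)) Hunbounded).
Qed.
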